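(* If $n$ is odd, the size-1 algorithm in which every robot uses $2gat$ solves the fault tolerant gathering problem FG (with at most one crash); hence the MAS of FG is $1$ when $n$ is odd.
   Context: Model. A swarm consists of $n\ge1$ robots $r_1,\dots,r_n$, modeled as points in $\mathbb R^2$. Each robot $r_i$ has a local right-handed $x$-$y$ coordinate system $Z_i$ whose origin is always the robot's current position, with arbitrary (adversarially chosen, fixed) unit length and axis orientation; robots do not share coordinate systems. The configuration at time $t$ is the multiset $P_t$ of the $n$ robot positions (robots can detect multiplicities). A target function $\phi$ maps each finite multiset $P$ of points of $\mathbb R^2$ with $(0,0)\in P$ to a point $\phi(P)\in\mathbb R^2$. Time is discrete, $t=0,1,2,\dots$. Under the semi-synchronous (SSYNC) scheduler, at each time $t$ an adversary chooses a set of robots to activate; each activated robot $r_i$ observes $P_t$ expressed in $Z_i$, evaluates its target function on this multiset, and moves to the resulting point (interpreted in $Z_i$), arriving before time $t+1$; non-activated robots do not move. Schedules are fair: every robot is activated infinitely often. An algorithm of size $m$ is a set $\Phi$ of $m$ distinct target functions ($m\le n$); an assignment is a surjection $\mathcal A$ from the robots onto $\Phi$, robot $r_i$ using $\mathcal A(r_i)$. $\Phi$ solves a problem if for every assignment, every choice of local coordinate systems, every initial configuration and every fair SSYNC schedule, the resulting execution solves the problem. The MAS of a problem is the least $m$ such that some algorithm of size $m$ solves it, and $\infty$ if no algorithm of any size $m\le n$ solves it. Crash faults. The adversary may choose up to $f$ robots to be faulty and, for each, a time from which it crashes: from then on it never moves again (even when activated); before that it behaves correctly. ''Solves under at most $f$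 crashes'' quantifies additionally over all such crash patterns. Notation and $2gat$. For a finite multiset $P$ of points in $\mathbb R^2$: $\overline P$ is the set of distinct points of $P$, $m_P=|\overline P|$, $\mu_P(q)$ is the multiplicity of $q$ in $P$; $o_P$ and $\rho_P$ are the center and radius of the smallest enclosing circle of $P$; $k_P$ is the order of the group of rotations about $o_P$ that map $\overline P$ onto itself and preserve $\mu_P$, with the convention $k_P=0$ if $m_P=1$. On $\mathbb R^2$, $<$ is the lexicographic order ($(p_x,p_y)<(q_x,q_y)$ iff $p_x<q_x$, or $p_x=q_x$ and $p_y<q_y$); multisets of $n$ points are compared by $\sqsubset$, the lexicographic order of their point sequences sorted increasingly by $<$. For $q\in\overline P\setminus\{o_P\}$, $\Xi_q$ is the right-handed coordinate system with origin $q$, unit length $\rho_P$, and positive $x$-axis pointing from $q$ toward $o_P$; the view $V_P(q)$ is the multiset $P$ written in the coordinates $\Xi_q$. When $k_P=1$, the total order $\succ_P$ on $\overline P$ is: $q\succ_P q'$ iff (i) $\mu_P(q)>\mu_P(q')$, or (ii) $\mu_P(q)=\mu_P(q')$ and $\|q-o_P\|<\|q'-o_P\|$, or (iii) $\mu_P(q)=\mu_P(q')$, $\|q-o_P\|=\|q'-o_P\|$ and $V_P(q')\sqsubset V_P(q)$. The target function $2gat$ is defined for multisets $P$ containing $(0,0)$ by: (1) if $m_P=1$, or $m_P=2$ and $k_P=2$, then $2gat(P)=(0,0)$; (2) if $m_P\ge2$ and $k_P=1$, then $2gat(P)$ is the $\succ_P$-largest point of $\overline P$; (3) if $m_P\ge3$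 and $k_P\ge2$, then $2gat(P)=o_P$. Problem. The fault tolerant gathering problem FG: starting from any initial configuration, with at most one crashed robot, reach a configuration in which all non-faulty robots occupy a single point. *)

(* concrete reals R, points of R^2 as pairs, multisets as lists
   (modulo permutation). *)
From Stdlib Require Import Reals Lra List Permutation Sorted ClassicalEpsilon.
Import ListNotations.
Open Scope R_scope.

Definition pt : Type := (R * R)%type.
Definition origin : pt := (0, 0).
Definition padd (p q : pt) : pt := (fst p + fst q, snd p + snd q).
Definition psub (p q : pt) : pt := (fst p - fst q, snd p - snd q).
Definition pscale (a : R) (p : pt) : pt := (a * fst p, a * snd p).
Definition dist (p q : pt) : R :=
  sqrt ((fst p - fst q) ^ 2 + (snd p - snd q) ^ 2).

Definition pt_eq_dec (p q : pt) : {p = q} + {p <> q}.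
Proof. decide equality; apply Req_EM_T. Defined.

Definition mult (P : list pt) (q : pt) : nat := count_occ pt_eq_dec P q.
Definition mP (P : list pt) : nat := length (nodup pt_eq_dec P).

Definition pt_lt (p q : pt) : Prop :=
  fst p < fst q \/ (fst p = fst q /\ snd p < snd q).
Definition pt_le (p q : pt) : Prop := pt_lt p q \/ p = q.

Fixpoint seq_lt (s t : list pt) : Prop :=
  match s, t with
  | [], [] => False
  | [], _ :: _ => True
  | _ :: _, [] => False
  | x :: s', y :: t' => pt_lt x y \/ (x = y /\ seq_lt s' t')
  end.

Definition ms_lt (P Q : list pt) : Prop :=
  exists s t, Permutation s P /\ Sorted pt_le s /\
              Permutation t Q /\ Sorted pt_le t /\ seq_lt s t.

Definition encloses (P : list pt) (o : pt) (r : R) : Prop :=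
  forall p, In p P -> dist o p <= r.

Definition is_SEC (P : list pt) (o : pt) (r : R) : Prop :=
  encloses P o r /\ (forall o' r', encloses P o' r' -> r <= r').

(* (o_P, rho_P); well defined (existence and uniqueness) for nonempty P *)
Definition SEC (P : list pt) : pt * R :=
  epsilon (inhabits (origin, 0)) (fun c => is_SEC P (fst c) (snd c)).
Definition oP (P : list pt) : pt := fst (SEC P).
Definition rhoP (P : list pt) : R := snd (SEC P).

Definition rot_about (o : pt) (c s : R) (p : pt) : pt :=
  padd o (c * (fst p - fst o) - s * (snd p - snd o),
          s * (fst p - fst o) + c * (snd p - snd o)).

Definition sym_rot (P : list pt) (c s : R) : Prop :=
  let r := rot_about (oP P) c s in
  (forall q, In q P -> In (r q) P) /\
  (forall q', In q' P -> exists q, In q P /\ r q = q') /\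
  (forall q, In q P -> mult P (r q) = mult P q).

Definition in_rot_group (P : list pt) (cs : R * R) : Prop :=
  fst cs ^ 2 + snd cs ^ 2 = 1 /\ sym_rot P (fst cs) (snd cs).

(* k_P : order of that group (finite when m_P >= 2); k_P = 0 if m_P = 1 *)
Definition kP (P : list pt) : nat :=
  if Nat.eqb (mP P) 1 then 0%nat
  else epsilon (inhabits 0%nat)
         (fun k => exists l : list (R * R),
              NoDup l /\ length l = k /\
              (forall cs, In cs l <-> in_rot_group P cs)).

(* coordinates of p in Xi_q: origin q, unit rho_P, x-axis towards o_P,
   right-handed *)
Definition xi_coords (P : list pt) (q p : pt) : pt :=
  let o := oP P in
  let rho := rhoP P in
  let d := dist q o in
  let ux := (fst o - fst q) / d in
  let uy := (snd o - snd q) / d in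
  let vx := fst p - fst q in
  let vy := snd p - snd q in
  ((vx * ux + vy * uy) / rho, (- vx * uy + vy * ux) / rho).

Definition view (P : list pt) (q : pt) : list pt := map (xi_coords P q) P.

Definition succP (P : list pt) (q q' : pt) : Prop :=
  (mult P q > mult P q')%nat \/
  (mult P q = mult P q' /\ dist q (oP P) < dist q' (oP P)) \/
  (mult P q = mult P q' /\ dist q (oP P) = dist q' (oP P) /\
   ms_lt (view P q') (view P q)).

Definition succ_largest (P : list pt) : pt :=
  epsilon (inhabits origin)
    (fun q => In q P /\ forall q', In q' P -> q' <> q -> succP P q q').

Definition target : Type := list pt -> pt.

Definition twogat : target := fun P =>
  if orb (Nat.eqb (mP P) 1) (andb (Nat.eqb (mP P) 2) (Nat.eqb (kP P) 2)) then origin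
  else if andb (Nat.leb 2 (mP P)) (Nat.eqb (kP P) 1) then succ_largest P
  else if andb (Nat.leb 3 (mP P)) (Nat.leb 2 (kP P)) then oP P
  else origin (* unreachable on nonempty multisets *).

(* a target function is a function of multisets: invariant under permutation *)
Definition target_wf (phi : target) : Prop :=
  forall P Q, Permutation P Q -> phi P = phi Q.

(* local right-handed coordinate system: unit length fscale > 0, axes
   rotated by the unit vector (fcos, fsin); origin = robot's position *)
Record frame := { fscale : R; fcos : R; fsin : R }.
Definition valid_frame (F : frame) : Prop :=
  0 < fscale F /\ fcos F ^ 2 + fsin F ^ 2 = 1.

Definition to_global (F : frame) (v : pt) : pt :=
  (fscale F * (fcos F * fst v - fsin F * snd v),
   fscale F * (fsin F * fst v + fcos F * snd v)).
Definition to_local (F : frame) (w : pt) : pt :=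
  ((fcos F * fst w + fsin F * snd w) / fscale F,
   (- fsin F * fst w + fcos F * snd w) / fscale F).

Definition config (n : nat) (pos : nat -> nat -> pt) (t : nat) : list pt :=
  map (pos t) (seq 0 n).

Definition local_view (n : nat) (pos : nat -> nat -> pt) (F : frame)
    (t i : nat) : list pt :=
  map (fun p => to_local F (psub p (pos t i))) (config n pos t).

(* An algorithm of size m: m distinct target functions, 1 <= m <= n.
   Distinct = they differ on some multiset containing (0,0) (their domain). *)
Definition algorithm (n : nat) (Phi : list target) (m : nat) : Prop :=
  length Phi = m /\ (1 <= m <= n)%nat /\
  (forall phi, In phi Phi -> target_wf phi) /\
  (forall i j, (i < m)%nat -> (j < m)%nat -> i <> j ->
     exists P, In origin P /\
       nth i Phi (fun _ => origin) P <> nth j Phi (fun _ => origin) P).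

Definition assignment (n : nat) (Phi : list target) (A : nat -> nat) : Prop :=
  (forall i, (i < n)%nat -> (A i < length Phi)%nat) /\
  (forall j, (j < length Phi)%nat -> exists i, (i < n)%nat /\ A i = j).

(* fair SSYNC schedule: act t i = true iff r_i is activated at time t *)
Definition fair (n : nat) (act : nat -> nat -> bool) : Prop :=
  forall i, (i < n)%nat -> forall t, exists t', (t <= t')%nat /\ act t' i = true.

(* crash pattern with at most one faulty robot:
   None = no faulty robot; Some (f, tc) = robot f crashes at time tc *)
Definition crash_pattern : Type := option (nat * nat).
Definition crash_ok (n : nat) (cr : crash_pattern) : Prop :=
  match cr with None => True | Some (f, _) => (f < n)%nat end.
Definition crashed (cr : crash_pattern) (i t : nat) : Prop :=
  match cr with None => False | Some (f, tc) => f = i /\ (tc <= t)%nat end.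
Definition nonfaulty (cr : crash_pattern) (i : nat) : Prop :=
  match cr with None => True | Some (f, _) => f <> i end.

(* pos t i = position of r_i at time t (global coordinates) *)
Definition execution (n : nat) (Phi : list target) (A : nat -> nat)
    (Fr : nat -> frame) (act : nat -> nat -> bool) (cr : crash_pattern)
    (pos : nat -> nat -> pt) : Prop :=
  forall t i, (i < n)%nat ->
    ((act t i = true /\ ~ crashed cr i t) ->
       pos (S t) i =
         padd (pos t i)
           (to_global (Fr i)
              (nth (A i) Phi (fun _ => origin) (local_view n pos (Fr i) t i)))) /\
    (~ (act t i = true /\ ~ crashed cr i t) -> pos (S t) i = pos t i).

Definition solves_FG (n : nat) (Phi : list target) : Prop :=
  forall (A : nat -> nat) (Fr : nat -> frame) (act : nat -> nat -> bool)
         (cr : crash_pattern) (pos : nat -> nat -> pt),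
    assignment n Phi A ->
    (forall i, (i < n)%nat -> valid_frame (Fr i)) ->
    fair n act ->
    crash_ok n cr ->
    execution n Phi A Fr act cr pos ->
    exists t, forall i j, (i < n)%nat -> (j < n)%nat ->
      nonfaulty cr i -> nonfaulty cr j -> pos t i = pos t j.

Definition MAS_is (n : nat) (solves : list target -> Prop) (m : nat) : Prop :=
  (exists Phi, algorithm n Phi m /\ solves Phi) /\
  (forall m' Phi, algorithm n Phi m' -> solves Phi -> (m <= m')%nat).

(* For a configuration P write [Tgt P] for the point that 2gat designates,
   expressed in global coordinates: the common position if m_P = 1, the
   ≻_P-largest point if k_P = 1, and the centre o_P of the smallest enclosing
   circle otherwise.

   1. Equivariance.  Centre/radius of the smallest enclosing circle,
      multiplicities, m_P, k_P and views all transform covariantly under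
      similarities; hence every activated, non-crashed robot moves exactly to
      [Tgt P_t], whatever its local frame.  Oddness of n rules out the only
      ambiguous case (m_P = 2 with a half-turn symmetry).
   2. Potential.  If the configuration changes in one round (all movers go
      to q = [Tgt P]), the multiplicity of the new target exceeds that of q
      in P: q only gains robots, and the new target is either q itself or
      a point of maximal multiplicity in P'.  The hard
      case, P and P' both rotationally symmetric, needs their centres to
      coincide ("Claim C"); we compare power sums of the rotation-invariant
      level sets of P and P', viewed as complex numbers.
   3. Progress.  By fairness a non-faulty robot away from the target is
      eventually activated, so the configuration eventually changes; well-
      founded induction on n minus the multiplicity of the target gathers
      all non-faulty robots.
   4. Minimality.  2gat depends only on the multiset it is given, so
      [twogat] alone is an algorithm of size 1, trivially minimal. *)

From Stdlib Require Import Reals Lra Lia Psatz List Permutation Sorted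
  ClassicalEpsilon Classical Ring FunctionalExtensionality PropExtensionality.
Import ListNotations.
Open Scope R_scope.

(* Squared distance: a polynomial, hence convenient for [ring]/[nra]. *)
Definition dist2 (p q : pt) : R := (fst p - fst q)^2 + (snd p - snd q)^2.

Lemma dist2_nonneg p q : 0 <= dist2 p q.
Proof. unfold dist2; apply Rplus_le_le_0_compat; apply pow2_ge_0. Qed.

Lemma dist_nonneg p q : 0 <= dist p q.
Proof. apply sqrt_pos. Qed.

Lemma dist_sym p q : dist p q = dist q p.
Proof. unfold dist; f_equal; nra. Qed.

Lemma dist_sqr p q : dist p q * dist p q = dist2 p q.
Proof. apply sqrt_sqrt, dist2_nonneg. Qed.

Lemma dist_le_iff p q r : 0 <= r -> (dist p q <= r <-> dist2 p q <= r * r).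
Proof.
  intros Hr; split; intro H.
  - rewrite <- dist_sqr. apply Rmult_le_compat; auto using dist_nonneg.
  - unfold dist. rewrite <- (sqrt_square r) by lra. apply sqrt_le_1_alt.
    unfold dist2 in H. lra.
Qed.

Lemma sumsq_eq0 x y : x^2 + y^2 = 0 -> x = 0 /\ y = 0.
Proof.
  intros H. pose proof (pow2_ge_0 x); pose proof (pow2_ge_0 y).
  split; apply NNPP; intros N; pose proof (pow_nonzero _ 2 N); nra.
Qed.

Lemma dist_eq0 p q : dist p q = 0 -> p = q.
Proof.
  intros H. assert (H2 : dist2 p q = 0) by (rewrite <- dist_sqr, H; ring).
  destruct p as [a b], q as [c d]; unfold dist2 in H2; simpl in H2.
  apply sumsq_eq0 in H2 as [E1 E2]. f_equal; lra.
Qed.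

Lemma dist_pos p q : p <> q -> 0 < dist p q.
Proof.
  intros H. destruct (dist_nonneg p q) as [H1|H1]; auto.
  exfalso; apply H, dist_eq0; auto.
Qed.

Lemma dist_refl p : dist p p = 0.
Proof.
  unfold dist. replace ((fst p - fst p)^2 + (snd p - snd p)^2) with 0 by ring.
  apply sqrt_0.
Qed.

Lemma cauchy_schwarz2 x1 y1 x2 y2 :
  x1 * x2 + y1 * y2 <= sqrt (x1^2 + y1^2) * sqrt (x2^2 + y2^2).
Proof.
  rewrite <- sqrt_mult_alt by nra.
  destruct (Rle_dec (x1 * x2 + y1 * y2) 0) as [Hn|Hn];
    [pose proof (sqrt_pos ((x1^2 + y1^2) * (x2^2 + y2^2))); lra|].
  rewrite <- (sqrt_square (x1 * x2 + y1 * y2)) by lra.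
  apply sqrt_le_1_alt. pose proof (pow2_ge_0 (x1 * y2 - x2 * y1)). nra.
Qed.

Lemma dist_triangle p q r : dist p r <= dist p q + dist q r.
Proof.
  pose proof (dist_nonneg p q); pose proof (dist_nonneg q r).
  apply Rsqr_incr_0_var; [| lra]. unfold Rsqr. rewrite dist_sqr.
  replace ((dist p q + dist q r) * (dist p q + dist q r)) with
    (dist2 p q + dist2 q r + 2 * (dist p q * dist q r)) by (rewrite <- !dist_sqr; ring).
  pose proof (cauchy_schwarz2 (fst p - fst q) (snd p - snd q) (fst q - fst r) (snd q - snd r)).
  unfold dist2, dist in *. nra.
Qed.

(** * Direct similarities of the plane *)

(* [sim l c s b] scales by [l], rotates by the unit vector [(c, s)] and
   translates by [b]; the change from global to any robot's local
   coordinates is of this form. *)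
Definition sim (l c s : R) (b : pt) (p : pt) : pt :=
  (l*(c*fst p - s*snd p) + fst b, l*(s*fst p + c*snd p) + snd b).

Definition simOK (l c s : R) : Prop := 0 < l /\ c^2 + s^2 = 1.

Lemma sim_dist2 l c s b p q : simOK l c s ->
  dist2 (sim l c s b p) (sim l c s b q) = l^2 * dist2 p q.
Proof.
  intros [Hl Hcs]. destruct p as [p1 p2], q as [q1 q2]; unfold sim, dist2; cbn [fst snd].
  replace ((l * (c * p1 - s * p2) + fst b - (l * (c * q1 - s * q2) + fst b)) ^ 2 +
   (l * (s * p1 + c * p2) + snd b - (l * (s * q1 + c * q2) + snd b)) ^ 2) with
   (l^2 * (c^2+s^2) * ((p1 - q1)^2 + (p2 - q2)^2)) by ring.
  rewrite Hcs; ring.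
Qed.

Lemma sim_dist l c s b p q : simOK l c s ->
  dist (sim l c s b p) (sim l c s b q) = l * dist p q.
Proof.
  intros H. unfold dist at 1. fold (dist2 (sim l c s b p) (sim l c s b q)).
  rewrite sim_dist2 by auto. rewrite sqrt_mult_alt by (destruct H; nra).
  rewrite <- (Rsqr_pow2 l), sqrt_Rsqr by (destruct H; lra). reflexivity.
Qed.

Lemma sim_inj l c s b p q : simOK l c s -> sim l c s b p = sim l c s b q -> p = q.
Proof.
  intros H E. apply dist_eq0. assert (dist (sim l c s b p) (sim l c s b q) = 0) by (rewrite E; apply dist_refl).
  rewrite sim_dist in H0 by auto. destruct H. apply Rmult_integral in H0; destruct H0; lra.
Qed.

(* Translation part of the inverse similarity. *)
Definition sim_inv_b (l c s : R) (b : pt) : pt :=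
  (- (c * fst b + s * snd b) / l, - (- s * fst b + c * snd b) / l).

Lemma sim_Kinv l c s b p : simOK l c s ->
  sim l c s b (sim (/l) c (-s) (sim_inv_b l c s b) p) = p.
Proof.
  intros [Hl Hc]. destruct p as [p1 p2], b as [b1 b2]; unfold sim, sim_inv_b; cbn [fst snd].
  f_equal.
  - transitivity ((c^2+s^2)*(p1-b1)+b1); [field; lra | rewrite Hc; ring].
  - transitivity ((c^2+s^2)*(p2-b2)+b2); [field; lra | rewrite Hc; ring].
Qed.

Lemma sim_rot l c s b o c' s' p :
  sim l c s b (rot_about o c' s' p) = rot_about (sim l c s b o) c' s' (sim l c s b p).
Proof.
  destruct o as [o1 o2], p as [p1 p2]; unfold sim, rot_about, padd; cbn [fst snd]. f_equal; ring.
Qed.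

(** * The smallest enclosing circle exists and is unique *)

(* [Fmax P o] is the radius of the smallest circle centred at [o] enclosing
   P; the smallest enclosing circle minimises it over [o]. *)
Definition Fmax (P : list pt) (o : pt) : R :=
  fold_right (fun p acc => Rmax (dist o p) acc) 0 P.

Lemma Fmax_nonneg P o : 0 <= Fmax P o.
Proof. induction P; simpl; [lra| eapply Rle_trans; [apply IHP | apply Rmax_r]]. Qed.

Lemma Fmax_ge P o p : In p P -> dist o p <= Fmax P o.
Proof.
  induction P as [|a P IH]; simpl; [tauto|]. intros [->|H].
  - apply Rmax_l.
  - eapply Rle_trans; [apply IH; auto | apply Rmax_r].
Qed.

Lemma Fmax_le P o r : 0 <= r -> (forall p, In p P -> dist o p <= r) -> Fmax P o <= r.
Proof.
  induction P as [|a P IH]; simpl; intros Hr H; [lra|].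
  apply Rmax_lub; auto.
Qed.

Lemma Fmax_cons a P o : Fmax (a::P) o = Rmax (dist o a) (Fmax P o).
Proof. reflexivity. Qed.

Lemma Fmax_lip P o o' : Fmax P o <= Fmax P o' + dist o o'.
Proof.
  induction P as [|a P IH].
  - simpl. pose proof (dist_nonneg o o'); lra.
  - rewrite !Fmax_cons. apply Rmax_lub.
    + pose proof (dist_triangle o o' a). pose proof (Rmax_l (dist o' a) (Fmax P o')). lra.
    + pose proof (Rmax_r (dist o' a) (Fmax P o')). lra.
Qed.

Lemma encloses_Fmax P o r : P <> [] -> encloses P o r -> Fmax P o <= r.
Proof.
  intros Hne H. apply Fmax_le; auto.
  destruct P as [|p P]; [congruence|]. eapply Rle_trans; [apply dist_nonneg | apply (H p); left; auto].
Qed.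

Lemma Fmax_encloses P o : encloses P o (Fmax P o).
Proof. intros p Hp; apply Fmax_ge; auto. Qed.

Lemma lip_continuity (f : R -> R) x : (forall a b, f a <= f b + Rabs (a - b)) -> continuity_pt f x.
Proof.
  intros H eps Heps. exists eps; split; auto. intros y [_ Hy]. simpl in *. unfold R_dist in *.
  pose proof (H y x); pose proof (H x y). rewrite Rabs_minus_sym in H1.
  apply Rabs_def1; lra.
Qed.

Lemma dist_x a b y : dist (a, y) (b, y) = Rabs (a - b).
Proof. unfold dist; cbn [fst snd]. replace ((a - b)^2 + (y - y)^2) with (Rsqr (a-b)) by (unfold Rsqr; ring).
  apply sqrt_Rsqr_abs. Qed.

Lemma dist_y a b x : dist (x, a) (x, b) = Rabs (a - b).
Proof. unfold dist; cbn [fst snd]. replace ((x - x)^2 + (a - b)^2) with (Rsqr (a-b)) by (unfold Rsqr; ring).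
  apply sqrt_Rsqr_abs. Qed.

(* Projection onto [-K, K]; clamping both coordinates of a centre into a box
   containing P can only decrease [Fmax P], so a minimiser over the box is a
   global minimiser. *)
Definition clamp (K x : R) : R := Rmax (-K) (Rmin K x).

Lemma clamp_in K x : 0 <= K -> -K <= clamp K x <= K.
Proof. intros HK; unfold clamp; split; [apply Rmax_l|]. apply Rmax_lub; [lra| apply Rmin_l]. Qed.

Lemma clamp_closer K x y : -K <= y <= K -> Rabs (clamp K x - y) <= Rabs (x - y).
Proof.
  intros Hy. unfold clamp, Rmax, Rmin.
  repeat (destruct Rle_dec); unfold Rabs; repeat destruct Rcase_abs; lra.
Qed.

(* Half-side of a centred square containing all points of P. *)
Definition Kbox (P : list pt) : R :=
  fold_right (fun p acc => Rmax (Rabs (fst p)) (Rmax (Rabs (snd p)) acc)) 0 P.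

Lemma Kbox_nonneg P : 0 <= Kbox P.
Proof. induction P; simpl; [lra|]. eapply Rle_trans; [|apply Rmax_r]. eapply Rle_trans; [|apply Rmax_r]. auto. Qed.

Lemma Kbox_ge P p : In p P -> Rabs (fst p) <= Kbox P /\ Rabs (snd p) <= Kbox P.
Proof.
  induction P as [|a P IH]; simpl; [tauto|]. intros [->|H].
  - split; [apply Rmax_l|]. eapply Rle_trans; [|apply Rmax_r]. apply Rmax_l.
  - destruct (IH H). split; (eapply Rle_trans; [|apply Rmax_r]); [|eapply Rle_trans; [|apply Rmax_r]]; auto.
    eapply Rle_trans; [|apply Rmax_r]; auto.
Qed.

Lemma dist_le_coordinatewise o o' p : Rabs (fst o' - fst p) <= Rabs (fst o - fst p) ->
  Rabs (snd o' - snd p) <= Rabs (snd o - snd p) -> dist o' p <= dist o p.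
Proof.
  intros H1 H2. unfold dist. apply sqrt_le_1_alt.
  rewrite <- !(Rsqr_pow2), !(Rsqr_abs (fst _ - _)), !(Rsqr_abs (snd _ - _)).
  apply Rplus_le_compat; apply Rsqr_incr_1; auto; apply Rabs_pos.
Qed.

Lemma Rabs_le_between x K : Rabs x <= K -> -K <= x <= K.
Proof. unfold Rabs; destruct Rcase_abs; lra. Qed.

Lemma Fmax_clamp P o : Fmax P (clamp (Kbox P) (fst o), clamp (Kbox P) (snd o)) <= Fmax P o.
Proof.
  apply Fmax_le; [apply Fmax_nonneg|]. intros p Hp.
  eapply Rle_trans; [|apply Fmax_ge; eauto]. destruct (Kbox_ge P p Hp) as [H1 H2].
  apply dist_le_coordinatewise; cbn [fst snd]; apply clamp_closer; apply Rabs_le_between; auto.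
Qed.

(* Minimise first over y for fixed x, then over x; both minimisations are
   of Lipschitz functions on a compact interval. *)
Lemma Fmax_min_exists P : exists o, forall o', Fmax P o <= Fmax P o'.
Proof.
  set (K := Kbox P). assert (HK : 0 <= K) by apply Kbox_nonneg.
  assert (Hy : forall x, { y | -K <= y <= K /\ forall y', -K <= y' <= K -> Fmax P (x,y) <= Fmax P (x,y')}).
  { intros x. apply constructive_indefinite_description.
    destruct (continuity_ab_min (fun y => Fmax P (x,y)) (-K) K) as [m [Hm1 Hm2]]; [lra| |].
    - intros c _. apply lip_continuity. intros a b. rewrite <- dist_y with (x:=x). apply Fmax_lip.
    - exists m; split; auto. }
  set (g := fun x => Fmax P (x, proj1_sig (Hy x))).
  assert (Hg : forall a b, g a <= g b + Rabs (a - b)).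
  { intros a b. unfold g. destruct (Hy a) as [ya [Hya1 Hya2]], (Hy b) as [yb [Hyb1 Hyb2]]; cbn [proj1_sig].
    eapply Rle_trans; [apply (Hya2 yb Hyb1)|]. rewrite <- (dist_x a b yb). apply Fmax_lip. }
  destruct (continuity_ab_min g (-K) K) as [xm [Hxm1 Hxm2]]; [lra| intros; apply lip_continuity; auto|].
  exists (xm, proj1_sig (Hy xm)). intros o'.
  eapply Rle_trans; [|apply Fmax_clamp].
  set (cx := clamp K (fst o')). set (cy := clamp K (snd o')).
  assert (Hcx : -K <= cx <= K) by (apply clamp_in; auto).
  assert (Hcy : -K <= cy <= K) by (apply clamp_in; auto).
  fold K. fold cx cy.
  eapply Rle_trans; [apply (Hxm1 cx Hcx)|]. unfold g.
  destruct (Hy cx) as [y [Hy1 Hy2]]; cbn [proj1_sig]. apply Hy2; auto.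
Qed.

Lemma SEC_exists P : P <> [] -> exists o r, is_SEC P o r.
Proof.
  intros Hne. destruct (Fmax_min_exists P) as [o Ho]. exists o, (Fmax P o). split.
  - apply Fmax_encloses.
  - intros o' r' H. apply Rle_trans with (Fmax P o'); [apply Ho | apply encloses_Fmax; auto].
Qed.

Lemma encloses_nonneg P o r : P <> [] -> encloses P o r -> 0 <= r.
Proof. intros Hne H. destruct P as [|p P]; [congruence|]. eapply Rle_trans; [apply dist_nonneg| apply (H p); left; auto]. Qed.

Lemma dist2_midpoint o1 o2 p :
  dist2 ((fst o1 + fst o2) / 2, (snd o1 + snd o2) / 2) p =
  (dist2 o1 p + dist2 o2 p) / 2 - dist2 o1 o2 / 4.
Proof. unfold dist2; cbn [fst snd]; field. Qed.

(* Two distinct minimal circles would give a strictly smaller circle centred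
   at the midpoint of their centres. *)
Lemma SEC_unique P o1 r1 o2 r2 : P <> [] -> is_SEC P o1 r1 -> is_SEC P o2 r2 -> o1 = o2 /\ r1 = r2.
Proof.
  intros Hne [E1 M1] [E2 M2].
  assert (Hr : r1 = r2) by (apply Rle_antisym; [apply (M1 o2 r2 E2) | apply (M2 o1 r1 E1)]).
  subst r2. split; auto.
  destruct (pt_eq_dec o1 o2) as [|Hneq]; auto. exfalso.
  pose proof (encloses_nonneg P o1 r1 Hne E1) as Hr0.
  set (m := ((fst o1 + fst o2)/2, (snd o1 + snd o2)/2)).
  set (d2 := dist2 o1 o2).
  assert (Hd : 0 < d2).
  { unfold d2; rewrite <- dist_sqr. pose proof (dist_pos _ _ Hneq). nra. }
  assert (Hm : forall p, In p P -> dist2 m p <= r1*r1 - d2/4).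
  { intros p Hp. pose proof (E1 p Hp); pose proof (E2 p Hp).
    apply (dist_le_iff _ _ _ Hr0) in H. apply (dist_le_iff _ _ _ Hr0) in H0.
    unfold m, d2. rewrite dist2_midpoint. lra. }
  destruct P as [|p0 P0]; [congruence|].
  assert (Hpos : 0 <= r1*r1 - d2/4) by (eapply Rle_trans; [apply dist2_nonneg | apply (Hm p0); left; auto]).
  assert (Henc : encloses (p0::P0) m (sqrt (r1*r1 - d2/4))).
  { intros p Hp. apply dist_le_iff; [apply sqrt_pos|]. rewrite sqrt_sqrt; auto. }
  pose proof (M1 _ _ Henc).
  assert (sqrt (r1 * r1 - d2 / 4) < r1).
  { assert (sqrt (r1 * r1 - d2 / 4) < sqrt (r1*r1)) by (apply sqrt_lt_1_alt; lra).
    rewrite sqrt_square in H0 by auto. auto. }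
  lra.
Qed.

Lemma SEC_spec P : P <> [] -> is_SEC P (oP P) (rhoP P).
Proof.
  intros Hne. unfold oP, rhoP, SEC.
  apply (epsilon_spec (inhabits (origin, 0)) (fun c => is_SEC P (fst c) (snd c))).
  destruct (SEC_exists P Hne) as [o [r H]]. exists (o, r); auto.
Qed.

(** * Covariance of the configuration invariants under similarities *)

Lemma map_ne {A B} (f : A -> B) P : P <> [] -> map f P <> [].
Proof. destruct P; simpl; congruence. Qed.

Lemma NoDup_map_inj {A B} (f : A -> B) L : (forall x y, f x = f y -> x = y) -> NoDup L -> NoDup (map f L).
Proof.
  intros Hf; induction 1; simpl; constructor; auto.
  intro Hin. apply in_map_iff in Hin as [y [E Hy]]. apply Hf in E; subst; auto.
Qed.

Section Sim.
Variables (l c s : R) (b : pt).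
Hypothesis Hok : simOK l c s.
Let h := sim l c s b.
Let hi := sim (/l) c (-s) (sim_inv_b l c s b).

Lemma h_hi x : h (hi x) = x. Proof. apply sim_Kinv; auto. Qed.

Lemma h_inj x y : h x = h y -> x = y. Proof. apply sim_inj; auto. Qed.

Lemma h_rot o c' s' p : h (rot_about o c' s' p) = rot_about (h o) c' s' (h p).
Proof. apply sim_rot. Qed.

Lemma In_map_h P x : In (h x) (map h P) <-> In x P.
Proof.
  split; intro H.
  - apply in_map_iff in H as [y [E Hy]]. apply h_inj in E; subst; auto.
  - apply in_map; auto.
Qed.

Lemma encloses_sim P o r : encloses (map h P) (h o) (l * r) <-> encloses P o r.
Proof.
  destruct Hok as [Hl _]. split; intros H p Hp.
  - specialize (H (h p) (in_map _ _ _ Hp)). unfold h in H; rewrite sim_dist in H by auto.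
    apply Rmult_le_reg_l in H; auto.
  - apply in_map_iff in Hp as [q [<- Hq]]. unfold h; rewrite sim_dist by auto.
    apply Rmult_le_compat_l; [lra|]. apply H; auto.
Qed.

(* The image of a minimal circle is minimal, by pulling back competitors. *)
Lemma is_SEC_sim P o r : is_SEC P o r -> is_SEC (map h P) (h o) (l * r).
Proof.
  destruct Hok as [Hl _]. intros [E M]. split.
  - apply encloses_sim; auto.
  - intros o' r' H'. rewrite <- (h_hi o') in H'.
    replace r' with (l * (r' / l)) in H' by (field; lra).
    apply (proj1 (encloses_sim P (hi o') (r'/l))) in H'. apply M in H'.
    apply (Rmult_le_compat_l l) in H'; [|lra]. replace (l * (r'/l)) with r' in H' by (field; lra). auto.
Qed.

Lemma oP_sim P : P <> [] -> oP (map h P) = h (oP P) /\ rhoP (map h P) = l * rhoP P.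
Proof.
  intros Hne. apply (SEC_unique (map h P)); [apply map_ne; auto | apply SEC_spec, map_ne; auto |].
  apply is_SEC_sim, SEC_spec; auto.
Qed.

Lemma mult_sim P x : mult (map h P) (h x) = mult P x.
Proof. unfold mult. symmetry. apply count_occ_map. apply h_inj. Qed.

Lemma mP_sim P : mP (map h P) = mP P.
Proof.
  unfold mP. replace (length (nodup pt_eq_dec P)) with (length (map h (nodup pt_eq_dec P))) by apply length_map.
  apply Permutation_length. apply NoDup_Permutation; [apply NoDup_nodup| apply NoDup_map_inj; [apply h_inj| apply NoDup_nodup]|].
  intros x. rewrite nodup_In. split; intro H.
  - apply in_map_iff in H as [y [<- Hy]]. apply in_map. apply nodup_In; auto.
  - apply in_map_iff in H as [y [<- Hy]]. apply in_map. apply nodup_In in Hy; auto.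
Qed.

(* h conjugates rotations about o_P to the same rotations about o_{hP}, so
   the symmetry group, and with it k_P, is invariant. *)
Lemma sym_rot_sim P cs1 cs2 : P <> [] -> sym_rot (map h P) cs1 cs2 <-> sym_rot P cs1 cs2.
Proof.
  intros Hne. unfold sym_rot. destruct (oP_sim P Hne) as [Eo _]. rewrite Eo.
  split; intros [H1 [H2 H3]]; split; [|split| |split].
  - intros q Hq. rewrite <- In_map_h, h_rot. apply H1. apply in_map; auto.
  - intros q' Hq'. destruct (H2 (h q')) as [q [Hq E]]; [apply in_map; auto|].
    apply in_map_iff in Hq as [y [<- Hy]]. exists y; split; auto. rewrite <- h_rot in E. apply h_inj in E; auto.
  - intros q Hq. rewrite <- (mult_sim P), <- (mult_sim P q), h_rot. apply H3. apply in_map; auto.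
  - intros q Hq. apply in_map_iff in Hq as [y [<- Hy]]. rewrite <- h_rot. apply in_map; auto.
  - intros q' Hq'. apply in_map_iff in Hq' as [y [<- Hy]]. destruct (H2 y Hy) as [q [Hq E]].
    exists (h q); split; [apply in_map; auto|]. rewrite <- h_rot, E; auto.
  - intros q Hq. apply in_map_iff in Hq as [y [<- Hy]]. rewrite <- h_rot, !mult_sim. auto.
Qed.

Lemma in_rot_group_sim P cs : P <> [] -> in_rot_group (map h P) cs <-> in_rot_group P cs.
Proof. intros Hne. unfold in_rot_group. rewrite sym_rot_sim; auto. tauto. Qed.

Lemma kP_sim P : P <> [] -> kP (map h P) = kP P.
Proof.
  intros Hne. unfold kP. rewrite mP_sim. destruct (Nat.eqb (mP P) 1); auto.
  f_equal. apply functional_extensionality; intro k. apply propositional_extensionality.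
  split; intros [L [H1 [H2 H3]]]; exists L; split; auto; split; auto; intros cs; rewrite H3;
    rewrite in_rot_group_sim; tauto.
Qed.

End Sim.

(** * The rotation group of a configuration and k_P *)

Lemma mP_one_all_eq P x y : mP P = 1%nat -> In x P -> In y P -> x = y.
Proof.
  unfold mP. intros H Hx Hy. rewrite <- (nodup_In pt_eq_dec) in Hx, Hy.
  destruct (nodup pt_eq_dec P) as [|a [|b L]]; simpl in *; try discriminate.
  destruct Hx as [<-|[]]; destruct Hy as [<-|[]]; auto.
Qed.

Lemma mP_ne1 P : P <> [] -> mP P <> 1%nat -> exists x y, In x P /\ In y P /\ x <> y.
Proof.
  unfold mP. intros Hne H.
  assert (Hnd := NoDup_nodup pt_eq_dec P).
  destruct (nodup pt_eq_dec P) as [|a [|b L]] eqn:E; simpl in *.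
  - destruct P as [|p P]; [congruence|]. exfalso.
    assert (In p (nodup pt_eq_dec (p::P))) by (apply nodup_In; left; auto). rewrite E in H0; auto.
  - lia.
  - exists a, b. inversion Hnd; subst. split; [|split].
    + apply (nodup_In pt_eq_dec). rewrite E; left; auto.
    + apply (nodup_In pt_eq_dec). rewrite E; right; left; auto.
    + intros ->; apply H2; left; auto.
Qed.

Lemma rot_id o q : rot_about o 1 0 q = q.
Proof. destruct o, q; unfold rot_about, padd; cbn [fst snd]; f_equal; ring. Qed.

Lemma id_in_group P : in_rot_group P (1,0).
Proof.
  unfold in_rot_group, sym_rot; cbn [fst snd]. split; [ring|].
  split; [|split].
  - intros q Hq; rewrite rot_id; auto.
  - intros q Hq; exists q; rewrite rot_id; auto.
  - intros q Hq; rewrite rot_id; auto.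
Qed.

Definition filterP {A} (Q : A -> Prop) (L : list A) : list A :=
  filter (fun x => if excluded_middle_informative (Q x) then true else false) L.

Lemma filterP_In {A} (Q : A -> Prop) L x : In x (filterP Q L) <-> In x L /\ Q x.
Proof.
  unfold filterP. rewrite filter_In. destruct excluded_middle_informative; intuition congruence.
Qed.

(* The rotation about [o] sending [q0] to [q] (for [q0 <> o]); since a
   symmetry maps [q0] into P, the symmetry group embeds in the finite image
   of P under this formula. *)
Definition cs_formula (o q0 q : pt) : R * R :=
  let u1 := fst q0 - fst o in let u2 := snd q0 - snd o in
  let v1 := fst q - fst o in let v2 := snd q - snd o in
  ((u1*v1 + u2*v2) / (u1^2+u2^2), (u1*v2 - u2*v1) / (u1^2+u2^2)).

Lemma cs_formula_ok o q0 c s : q0 <> o ->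
  cs_formula o q0 (rot_about o c s q0) = (c, s).
Proof.
  intros Hq. destruct o as [o1 o2], q0 as [q1 q2]. unfold cs_formula, rot_about, padd; cbn [fst snd].
  assert (Hxy : (q1-o1)^2 + (q2-o2)^2 <> 0).
  { intro H0. apply sumsq_eq0 in H0 as [H1 H2]. apply Hq. f_equal; lra. }
  f_equal; field; auto.
Qed.

Lemma rot_fix o c s q : rot_about o c s q = q -> q <> o -> c = 1 /\ s = 0.
Proof.
  intros E Hq. pose proof (cs_formula_ok o q c s Hq) as F. rewrite E in F.
  assert (Hn : (fst q - fst o)^2 + (snd q - snd o)^2 <> 0).
  { intro H0. apply sumsq_eq0 in H0 as [H1 H2]. apply Hq.
    destruct q, o; cbn in *; f_equal; lra. }
  unfold cs_formula in F. injection F as F1 F2.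
  split; [rewrite <- F1 | rewrite <- F2]; field; simpl in Hn; lra.
Qed.

Lemma group_finite P : P <> [] -> mP P <> 1%nat ->
  exists L, NoDup L /\ forall cs, In cs L <-> in_rot_group P cs.
Proof.
  intros Hne Hm. destruct (mP_ne1 P Hne Hm) as [x [y [Hx [Hy Hxy]]]].
  assert (Hq0 : exists q0, In q0 P /\ q0 <> oP P).
  { destruct (pt_eq_dec x (oP P)); [exists y; split; auto; congruence| exists x; auto]. }
  destruct Hq0 as [q0 [Hq0 Hq0o]].
  exists (nodup pt_eq_dec (filterP (in_rot_group P) (map (cs_formula (oP P) q0) P))).
  split; [apply NoDup_nodup|]. intros cs. rewrite nodup_In, filterP_In. split; [tauto|].
  intros H; split; auto. destruct cs as [c s]. destruct H as [Hu [H1 _]]. cbn [fst snd] in *.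
  rewrite <- (cs_formula_ok (oP P) q0 c s) by auto. apply in_map. apply H1; auto.
Qed.

Lemma kP_spec P : P <> [] -> mP P <> 1%nat ->
  exists L, NoDup L /\ length L = kP P /\ forall cs, In cs L <-> in_rot_group P cs.
Proof.
  intros Hne Hm. unfold kP. destruct (Nat.eqb_spec (mP P) 1); [contradiction|].
  apply (epsilon_spec (inhabits 0%nat) (fun k => exists L, NoDup L /\ length L = k /\ forall cs, In cs L <-> in_rot_group P cs)).
  destruct (group_finite P Hne Hm) as [L [H1 H2]]. exists (length L), L; auto.
Qed.

Lemma kP_one_trivial P : P <> [] -> mP P <> 1%nat -> kP P = 1%nat ->
  forall cs, in_rot_group P cs -> cs = (1,0).
Proof.
  intros Hne Hm Hk cs Hcs. destruct (kP_spec P Hne Hm) as [L [Hnd [Hl HL]]].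
  rewrite Hk in Hl. destruct L as [|a [|b L]]; simpl in Hl; try lia.
  assert (In (1,0) [a]) by (apply HL, id_in_group). assert (In cs [a]) by (apply HL; auto).
  simpl in *. destruct H as [<-|[]]; destruct H0 as [<-|[]]; auto.
Qed.

Lemma kP_ne1_nontrivial P : P <> [] -> mP P <> 1%nat -> kP P <> 1%nat ->
  exists cs, in_rot_group P cs /\ cs <> (1,0).
Proof.
  intros Hne Hm Hk. destruct (kP_spec P Hne Hm) as [L [Hnd [Hl HL]]].
  assert (Hid : In (1,0) L) by (apply HL, id_in_group).
  destruct L as [|a [|b L]]; simpl in Hl; [destruct Hid| lia|].
  inversion Hnd; subst. destruct (pt_eq_dec a (1,0)) as [->|Ha].
  - exists b. split; [apply HL; right; left; auto|]. intros ->. apply H1; left; auto.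
  - exists a. split; [apply HL; left; auto| auto].
Qed.

(** * The lexicographic orders on points and on multisets *)

Lemma pt_lt_irrefl p : ~ pt_lt p p.
Proof. unfold pt_lt; lra. Qed.

Lemma pt_lt_trans p q r : pt_lt p q -> pt_lt q r -> pt_lt p r.
Proof. unfold pt_lt; intros [H|[H1 H2]] [H'|[H1' H2']]; lra. Qed.

Lemma pt_lt_asym p q : pt_lt p q -> ~ pt_lt q p.
Proof. unfold pt_lt; intros [H|[H1 H2]] [H'|[H1' H2']]; lra. Qed.

Lemma pt_lt_total p q : p = q \/ pt_lt p q \/ pt_lt q p.
Proof.
  destruct p as [a b], q as [c d]; unfold pt_lt; cbn [fst snd].
  destruct (Rtotal_order a c) as [H|[H|H]]; auto.
  subst. destruct (Rtotal_order b d) as [H|[H|H]]; subst; auto.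
Qed.

Lemma pt_le_trans p q r : pt_le p q -> pt_le q r -> pt_le p r.
Proof. unfold pt_le; intros [H|H] [H'|H']; subst; eauto using pt_lt_trans. Qed.

Lemma pt_le_antisym p q : pt_le p q -> pt_le q p -> p = q.
Proof. unfold pt_le; intros [H|H] [H'|H']; subst; auto. exfalso; eapply pt_lt_asym; eauto. Qed.

Lemma pt_le_total p q : pt_le p q \/ pt_le q p.
Proof. unfold pt_le. destruct (pt_lt_total p q) as [H|[H|H]]; auto. Qed.

Definition pt_leb (p q : pt) : bool :=
  if Rlt_dec (fst p) (fst q) then true
  else if Req_EM_T (fst p) (fst q) then (if Rle_dec (snd p) (snd q) then true else false)
  else false.

Lemma pt_leb_spec p q : pt_leb p q = true <-> pt_le p q.
Proof.
  destruct p as [a b], q as [c d]. unfold pt_leb, pt_le, pt_lt; cbn [fst snd].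
  destruct (Rlt_dec a c); [split; auto|].
  destruct (Req_EM_T a c); [|split; [discriminate| intros [H|H]; [lra| injection H; lra]]].
  subst. destruct (Rle_dec b d); split; auto; try discriminate.
  - intros _. destruct r; auto. subst; auto.
  - intros [H|H]; [lra| injection H; lra].
Qed.

Fixpoint insert (x : pt) (s : list pt) : list pt :=
  match s with
  | [] => [x]
  | y :: s' => if pt_leb x y then x :: y :: s' else y :: insert x s'
  end.

Fixpoint isort (s : list pt) : list pt :=
  match s with [] => [] | x :: s' => insert x (isort s') end.

Lemma insert_perm x s : Permutation (insert x s) (x :: s).
Proof.
  induction s as [|y s IH]; simpl; auto. destruct (pt_leb x y); auto.
  eapply perm_trans; [apply perm_skip, IH| apply perm_swap].
Qed.

Lemma isort_perm s : Permutation (isort s) s.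
Proof. induction s; simpl; auto. eapply perm_trans; [apply insert_perm| auto]. Qed.

Lemma insert_sorted x s : Sorted pt_le s -> Sorted pt_le (insert x s).
Proof.
  induction 1 as [|y s Hs IH Hh]; simpl; [auto|].
  destruct (pt_leb x y) eqn:E.
  - constructor; [constructor; auto| constructor; apply pt_leb_spec; auto].
  - assert (Hyx : pt_le y x).
    { destruct (pt_le_total x y) as [H|H]; auto. apply pt_leb_spec in H; congruence. }
    constructor; auto. destruct s as [|z s]; simpl; [constructor; auto|].
    destruct (pt_leb x z); constructor; auto. inversion Hh; auto.
Qed.

Lemma isort_sorted s : Sorted pt_le (isort s).
Proof. induction s; simpl; auto using insert_sorted. Qed.

Lemma sorted_head_le a s x : Sorted pt_le (a :: s) -> In x s -> pt_le a x.
Proof.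
  intros H Hx. apply Sorted_StronglySorted in H; [|intros ? ? ?; apply pt_le_trans].
  inversion H; subst. rewrite Forall_forall in H3; auto.
Qed.

Lemma sorted_unique s t : Sorted pt_le s -> Sorted pt_le t -> Permutation s t -> s = t.
Proof.
  revert t. induction s as [|a s IH]; intros t Hs Ht Hp.
  - apply Permutation_nil in Hp; auto.
  - destruct t as [|b t]; [apply Permutation_sym, Permutation_nil in Hp; discriminate|].
    assert (Eab : a = b).
    { assert (Ha : In a (b :: t)) by (eapply Permutation_in; eauto; left; auto).
      assert (Hb : In b (a :: s)) by (eapply Permutation_in; [apply Permutation_sym; eauto| left; auto]).
      destruct Ha as [Ha|Ha]; auto. destruct Hb as [Hb|Hb]; auto.
      apply pt_le_antisym; [eapply sorted_head_le; eauto | eapply sorted_head_le; eauto]. }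
    subst. f_equal. apply IH; [inversion Hs| inversion Ht| eapply Permutation_cons_inv; eauto]; auto.
Qed.

Lemma seq_lt_irrefl s : ~ seq_lt s s.
Proof. induction s; simpl; auto. intros [H|[_ H]]; [eapply pt_lt_irrefl; eauto| auto]. Qed.

Lemma seq_lt_trans s t u : seq_lt s t -> seq_lt t u -> seq_lt s u.
Proof.
  revert t u. induction s as [|a s IH]; intros [|b t] [|c u]; simpl; auto; try tauto.
  intros [H|[E H]] [H'|[E' H']]; subst; eauto using pt_lt_trans.
Qed.

Lemma seq_lt_total s t : s = t \/ seq_lt s t \/ seq_lt t s.
Proof.
  revert t. induction s as [|a s IH]; intros [|b t]; simpl; auto.
  destruct (pt_lt_total a b) as [->|[H|H]]; auto.
  destruct (IH t) as [->|[H|H]]; auto.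
Qed.

Lemma ms_lt_sorted P Q : ms_lt P Q <-> seq_lt (isort P) (isort Q).
Proof.
  split.
  - intros [s [t [H1 [H2 [H3 [H4 H5]]]]]].
    rewrite (sorted_unique (isort P) s), (sorted_unique (isort Q) t); auto using isort_sorted.
    + eapply perm_trans; [apply isort_perm| apply Permutation_sym; auto].
    + eapply perm_trans; [apply isort_perm| apply Permutation_sym; auto].
  - intros H. exists (isort P), (isort Q). repeat split; auto using isort_perm, isort_sorted.
Qed.

Lemma ms_lt_irrefl P : ~ ms_lt P P.
Proof. rewrite ms_lt_sorted. apply seq_lt_irrefl. Qed.

Lemma ms_lt_trans P Q S : ms_lt P Q -> ms_lt Q S -> ms_lt P S.
Proof. rewrite !ms_lt_sorted. apply seq_lt_trans. Qed.

Lemma ms_lt_total P Q : Permutation P Q \/ ms_lt P Q \/ ms_lt Q P.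
Proof.
  rewrite !ms_lt_sorted. destruct (seq_lt_total (isort P) (isort Q)) as [E|H]; auto.
  left. eapply perm_trans; [apply Permutation_sym, isort_perm|]. rewrite E. apply isort_perm.
Qed.

(** * Views and the rotation relating two equal views *)

(* Unit vector from [q] towards [o]: the x-axis of the frame Xi_q. *)
Definition uvec (q o : pt) : pt := ((fst o - fst q)/dist q o, (snd o - snd q)/dist q o).

Lemma uvec_unit q o : q <> o -> fst (uvec q o)^2 + snd (uvec q o)^2 = 1.
Proof.
  intros H. pose proof (dist_pos q o H). unfold uvec; cbn [fst snd].
  transitivity (dist2 q o / (dist q o * dist q o)); [unfold dist2; field; lra|].
  rewrite dist_sqr. field. unfold dist2. intro E. apply sumsq_eq0 in E as [E1 E2]. apply H.
  destruct q, o; cbn [fst snd] in *; f_equal; lra.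
Qed.

Lemma uvec_q q o : q <> o -> fst q = fst o - dist q o * fst (uvec q o) /\ snd q = snd o - dist q o * snd (uvec q o).
Proof. intros H. pose proof (dist_pos q o H). unfold uvec; cbn [fst snd]. split; field; lra. Qed.

(* The rotation about [o] carrying the ray [o q] onto the ray [o q']. *)
Definition rot_cs (q q' o : pt) : R * R :=
  let u := uvec q o in let v := uvec q' o in
  (fst u * fst v + snd u * snd v, fst u * snd v - snd u * fst v).

Lemma rot_cs_unit q q' o : q <> o -> q' <> o -> fst (rot_cs q q' o)^2 + snd (rot_cs q q' o)^2 = 1.
Proof.
  intros H H'. pose proof (uvec_unit q o H); pose proof (uvec_unit q' o H'). unfold rot_cs; cbn [fst snd].
  destruct (uvec q o) as [a b], (uvec q' o) as [c d]; cbn [fst snd] in *.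
  transitivity ((a^2+b^2)*(c^2+d^2)); [ring| rewrite H0, H1; ring].
Qed.

(* Equidistant points have the same view of P after rotating P by
   [rot_cs q q']: the frames Xi_q and Xi_q' differ exactly by that rotation. *)
Lemma xi_rot P q q' p : q <> oP P -> q' <> oP P -> dist q (oP P) = dist q' (oP P) ->
  xi_coords P q' (rot_about (oP P) (fst (rot_cs q q' (oP P))) (snd (rot_cs q q' (oP P))) p) = xi_coords P q p.
Proof.
  intros H H' Hd. set (o := oP P) in *.
  pose proof (uvec_unit q o H) as U1; pose proof (uvec_unit q' o H') as U2.
  destruct (uvec_q q o H) as [Q1 Q2]; destruct (uvec_q q' o H') as [Q1' Q2'].
  unfold xi_coords, rot_cs, rot_about, padd. fold o. cbn [fst snd].
  change ((fst o - fst q) / dist q o) with (fst (uvec q o)).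
  change ((snd o - snd q) / dist q o) with (snd (uvec q o)).
  change ((fst o - fst q') / dist q' o) with (fst (uvec q' o)).
  change ((snd o - snd q') / dist q' o) with (snd (uvec q' o)).
  rewrite Q1, Q2, Q1', Q2'. rewrite <- Hd in *.
  destruct (uvec q o) as [ux uy], (uvec q' o) as [vx vy]; cbn [fst snd] in *.
  set (d := dist q o). set (w1 := fst p - fst o). set (w2 := snd p - snd o).
  f_equal; f_equal.
  - transitivity ((vx^2+vy^2)*(d + w1*ux + w2*uy)); [unfold w1, w2; ring|].
    transitivity ((ux^2+uy^2)*d + w1*ux + w2*uy); [|unfold w1, w2; ring].
    rewrite U1, U2; ring.
  - transitivity ((vx^2+vy^2)*(- w1*uy + w2*ux)); [unfold w1, w2; ring|].
    transitivity (- w1*uy + w2*ux); [|unfold w1, w2; ring].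
    rewrite U2; ring.
Qed.

Lemma rhoP_pos P : P <> [] -> mP P <> 1%nat -> 0 < rhoP P.
Proof.
  intros Hne Hm. destruct (mP_ne1 P Hne Hm) as [x [y [Hx [Hy Hxy]]]].
  destruct (SEC_spec P Hne) as [E _].
  pose proof (E x Hx); pose proof (E y Hy). pose proof (dist_triangle x (oP P) y).
  rewrite (dist_sym x (oP P)) in H1. pose proof (dist_pos x y Hxy). lra.
Qed.

Lemma xi_inj P q p1 p2 : q <> oP P -> rhoP P <> 0 -> xi_coords P q p1 = xi_coords P q p2 -> p1 = p2.
Proof.
  intros Hq Hr E. pose proof (uvec_unit q (oP P) Hq) as U.
  unfold xi_coords in E. change ((fst (oP P) - fst q) / dist q (oP P)) with (fst (uvec q (oP P))) in E.
  change ((snd (oP P) - snd q) / dist q (oP P)) with (snd (uvec q (oP P))) in E.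
  destruct (uvec q (oP P)) as [ux uy]; cbn [fst snd] in *.
  injection E as E1 E2.
  apply (Rmult_eq_compat_r (rhoP P)) in E1. apply (Rmult_eq_compat_r (rhoP P)) in E2.
  unfold Rdiv in E1, E2. rewrite !Rmult_assoc, !Rinv_l, !Rmult_1_r in E1, E2 by auto.
  destruct p1 as [a1 b1], p2 as [a2 b2]; cbn [fst snd] in *.
  assert (D1 : (a1 - a2) * (ux^2+uy^2) = 0).
  { transitivity (ux*((a1 - fst q) * ux + (b1 - snd q) * uy - ((a2 - fst q) * ux + (b2 - snd q) * uy))
       - uy*(- (a1 - fst q) * uy + (b1 - snd q) * ux - (- (a2 - fst q) * uy + (b2 - snd q) * ux))); [ring|].
    rewrite E1, E2; ring. }
  assert (D2 : (b1 - b2) * (ux^2+uy^2) = 0).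
  { transitivity (uy*((a1 - fst q) * ux + (b1 - snd q) * uy - ((a2 - fst q) * ux + (b2 - snd q) * uy))
       + ux*(- (a1 - fst q) * uy + (b1 - snd q) * ux - (- (a2 - fst q) * uy + (b2 - snd q) * ux))); [ring|].
    rewrite E1, E2; ring. }
  rewrite U in D1, D2. f_equal; lra.
Qed.

Lemma rot_sim o c s p : rot_about o c s p =
  sim 1 c s (fst o - c * fst o + s * snd o, snd o - s * fst o - c * snd o) p.
Proof. destruct o, p; unfold rot_about, sim, padd; cbn [fst snd]; f_equal; ring. Qed.

Lemma rot_inj o c s p p' : c^2 + s^2 = 1 -> rot_about o c s p = rot_about o c s p' -> p = p'.
Proof. intros H E. rewrite !rot_sim in E. eapply sim_inj; [| exact E]; split; [lra | exact H]. Qed.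

Lemma Permutation_map_inj (f : pt -> pt) A B : (forall x y, f x = f y -> x = y) ->
  Permutation (map f A) (map f B) -> Permutation A B.
Proof.
  intros Hf Hp. apply (Permutation_count_occ pt_eq_dec). intros x.
  rewrite (@count_occ_map pt pt f pt_eq_dec pt_eq_dec Hf x A), (@count_occ_map pt pt f pt_eq_dec pt_eq_dec Hf x B).
  apply Permutation_count_occ; auto.
Qed.

Lemma perm_sym_rot P c s : c^2 + s^2 = 1 -> Permutation (map (rot_about (oP P) c s) P) P -> sym_rot P c s.
Proof.
  intros Hcs Hp. unfold sym_rot. split; [|split].
  - intros q Hq. eapply Permutation_in; [exact Hp| apply in_map; auto].
  - intros q' Hq'. apply (Permutation_in _ (Permutation_sym Hp)) in Hq'. apply in_map_iff in Hq' as [q [E Hq]].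
    exists q; auto.
  - intros q Hq. unfold mult.
    assert (Hc := proj1 (Permutation_count_occ pt_eq_dec _ _) Hp (rot_about (oP P) c s q)).
    rewrite <- Hc. symmetry. apply count_occ_map. intros; eapply rot_inj; eauto.
Qed.

Lemma xi_self P q : xi_coords P q q = (0,0).
Proof. unfold xi_coords; cbn [fst snd]; f_equal; unfold Rdiv; ring. Qed.

(* Key fact behind the total order ≻_P: two distinct points at the same
   distance from o_P with the same view differ by a non-trivial symmetry. *)
Lemma view_perm_rot P q q' : q <> q' -> q <> oP P -> q' <> oP P -> dist q (oP P) = dist q' (oP P) ->
  rhoP P <> 0 -> Permutation (view P q) (view P q') ->
  in_rot_group P (rot_cs q q' (oP P)) /\ rot_cs q q' (oP P) <> (1,0).
Proof.
  intros Hqq Hq Hq' Hd Hr Hp. set (cs := rot_cs q q' (oP P)).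
  assert (Hcs : fst cs ^2 + snd cs ^2 = 1) by (apply rot_cs_unit; auto).
  set (phi := rot_about (oP P) (fst cs) (snd cs)).
  assert (E : map (xi_coords P q') (map phi P) = view P q).
  { unfold view. rewrite map_map. apply map_ext. intros p. apply xi_rot; auto. }
  assert (Hp2 : Permutation (map phi P) P).
  { apply (Permutation_map_inj (xi_coords P q')); [intros; eapply xi_inj; eauto|]. rewrite E. exact Hp. }
  split.
  - split; auto. apply perm_sym_rot; auto.
  - intros Ecs. assert (Hphi : phi q = q') .
    { apply (xi_inj P q'); auto. unfold phi, cs. rewrite xi_rot by auto.
      rewrite !xi_self. auto. }
    apply Hqq. rewrite <- Hphi. unfold phi. rewrite Ecs. cbn [fst snd]. rewrite rot_id. auto.
Qed.

(** * ≻_P is a strict total order when k_P = 1 *)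

Lemma succP_asym P q q' : succP P q q' -> ~ succP P q' q.
Proof.
  unfold succP. intros H1 H2.
  destruct H1 as [A|[[A B]|[A [B C]]]]; destruct H2 as [A'|[[A' B']|[A' [B' C']]]]; try lia; try lra.
  eapply ms_lt_irrefl, ms_lt_trans; eauto.
Qed.

Lemma succP_trans P a b c : succP P a b -> succP P b c -> succP P a c.
Proof.
  unfold succP. intros H1 H2.
  destruct H1 as [A|[[A B]|[A [B C]]]]; destruct H2 as [A'|[[A' B']|[A' [B' C']]]];
    try (left; lia); right.
  - left; split; [lia|lra].
  - left; split; [lia|lra].
  - left; split; [lia|lra].
  - right; split; [lia|split; [lra| eapply ms_lt_trans; eauto]].
Qed.

(* Totality: ties in multiplicity, distance and view would produce a
   non-trivial rotational symmetry, contradicting k_P = 1. *)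
Lemma succP_total P q q' : P <> [] -> mP P <> 1%nat -> kP P = 1%nat ->
  In q P -> In q' P -> q <> q' -> succP P q q' \/ succP P q' q.
Proof.
  intros Hne Hm Hk Hq Hq' Hqq. unfold succP.
  destruct (Nat.lt_total (mult P q) (mult P q')) as [L|[E|L]]; [right; left; lia| |left; left; lia].
  destruct (Rtotal_order (dist q (oP P)) (dist q' (oP P))) as [D|[D|D]].
  { left; right; left; auto. }
  2: { right; right; left; auto. }
  destruct (ms_lt_total (view P q) (view P q')) as [Pm|[M|M]].
  2: { right; right; right; auto. }
  2: { left; right; right; auto. }
  exfalso.
  assert (Hqo : q <> oP P).
  { intros Eq. rewrite Eq, dist_refl in D. apply Hqq. rewrite Eq. symmetry. apply dist_eq0. lra. }
  assert (Hqo' : q' <> oP P).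
  { intros Eq. rewrite Eq, dist_refl in D. apply Hqq. rewrite Eq. apply dist_eq0. lra. }
  pose proof (rhoP_pos P Hne Hm).
  destruct (view_perm_rot P q q' Hqq Hqo Hqo' D ltac:(lra) Pm) as [G N].
  apply N. eapply kP_one_trivial; eauto.
Qed.

Lemma exists_max (R : pt -> pt -> Prop) (L : list pt) :
  L <> [] -> (forall a b c, R a b -> R b c -> R a c) ->
  (forall a b, In a L -> In b L -> a <> b -> R a b \/ R b a) ->
  exists m, In m L /\ forall x, In x L -> x <> m -> R m x.
Proof.
  intros Hne Ht. induction L as [|a L IH]; [congruence|]. intros Htot.
  destruct L as [|b L].
  - exists a. split; [left; auto|]. intros x [->|[]]; congruence.
  - destruct IH as [m [Hm Hmax]]; [congruence| intros; apply Htot; simpl in *; auto|].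
    destruct (pt_eq_dec a m) as [->|Ham].
    + exists m. split; [right; auto|]. intros x [->|Hx] Hxm; [congruence| auto].
    + destruct (Htot a m) as [R1|R1]; [left; auto| right; auto| auto| |].
      * exists a. split; [left; auto|]. intros x [->|Hx] Hxa; [congruence|].
        destruct (pt_eq_dec x m) as [->|Hxm]; auto. eapply Ht; eauto.
      * exists m. split; [right; auto|]. intros x [->|Hx] Hxm; auto.
Qed.

Definition is_largest (P : list pt) (q : pt) : Prop :=
  In q P /\ forall q', In q' P -> q' <> q -> succP P q q'.

Lemma largest_unique P q1 q2 : is_largest P q1 -> is_largest P q2 -> q1 = q2.
Proof.
  intros [H1 M1] [H2 M2]. destruct (pt_eq_dec q1 q2) as [|N]; auto. exfalso.
  apply (succP_asym P q1 q2); [apply M1; auto| apply M2; auto].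
Qed.

Lemma succ_largest_eq P q : is_largest P q -> succ_largest P = q.
Proof.
  intros H. apply (largest_unique P); auto. unfold succ_largest.
  apply (epsilon_spec (inhabits origin) (fun q => In q P /\ forall q', In q' P -> q' <> q -> succP P q q')).
  exists q; auto.
Qed.

Lemma succ_largest_spec P : P <> [] -> mP P <> 1%nat -> kP P = 1%nat -> is_largest P (succ_largest P).
Proof.
  intros Hne Hm Hk.
  destruct (exists_max (succP P) P Hne (succP_trans P)) as [m [Hm1 Hm2]].
  - intros; apply succP_total; auto.
  - rewrite (succ_largest_eq P m); split; auto.
Qed.

Lemma largest_max_mult P q : is_largest P q -> forall x, In x P -> (mult P x <= mult P q)%nat.
Proof.
  intros [Hq M] x Hx. destruct (pt_eq_dec x q) as [->|N]; auto.
  specialize (M x Hx N). unfold succP in M. destruct M as [A|[[A _]|[A _]]]; lia.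
Qed.

Lemma unique_max_largest P q : In q P -> (forall x, In x P -> x <> q -> (mult P x < mult P q)%nat) ->
  is_largest P q.
Proof. intros Hq H. split; auto. intros q' Hq' N. left. specialize (H q' Hq' N). lia. Qed.

Section Sim2.
Variables (l c s : R) (b : pt).
Hypothesis Hok : simOK l c s.
Let h := sim l c s b.

(* The frame Xi_{hq} of hP is the image of the frame Xi_q of P, with unit
   length scaled accordingly, so coordinates are unchanged. *)
Lemma xi_sim P q p : P <> [] -> mP P <> 1%nat ->
  xi_coords (map h P) (h q) (h p) = xi_coords P q p.
Proof.
  intros Hne Hm. destruct (oP_sim l c s b Hok P Hne) as [Eo Er]. fold h in Eo, Er.
  pose proof (rhoP_pos P Hne Hm) as Hr. destruct Hok as [Hl Hcs].
  unfold xi_coords. rewrite Eo, Er.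
  destruct (pt_eq_dec q (oP P)) as [Eq|Nq].
  - rewrite <- Eq. unfold Rdiv. cbn [fst snd]. f_equal; ring.
  - assert (Hd := dist_pos _ _ Nq). unfold h. rewrite sim_dist by auto.
    set (o := oP P) in *. set (rho := rhoP P) in *.
    destruct q as [q1 q2], p as [p1 p2], o as [o1 o2], b as [b1 b2]. unfold sim; cbn [fst snd] in *.
    set (d := dist (q1, q2) (o1, o2)) in *.
    f_equal.
    + transitivity ((c^2+s^2) * (((p1 - q1) * (o1 - q1) + (p2 - q2) * (o2 - q2)) / (d * rho)));
        [field; lra|]. rewrite Hcs; field; lra.
    + transitivity ((c^2+s^2) * ((- (p1 - q1) * (o2 - q2) + (p2 - q2) * (o1 - q1)) / (d * rho)));
        [field; lra|]. rewrite Hcs; field; lra.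
Qed.

Lemma view_sim P q : P <> [] -> mP P <> 1%nat -> view (map h P) (h q) = view P q.
Proof. intros. unfold view. rewrite map_map. apply map_ext. intros; apply xi_sim; auto. Qed.

Lemma succP_sim P q q' : P <> [] -> mP P <> 1%nat ->
  succP (map h P) (h q) (h q') <-> succP P q q'.
Proof.
  intros Hne Hm. destruct (oP_sim l c s b Hok P Hne) as [Eo _].
  unfold succP. rewrite !view_sim by auto. unfold h. rewrite Eo, !mult_sim, !sim_dist by auto.
  destruct Hok as [Hl _].
  split; intros [A|[[A B]|[A [B C]]]]; auto.
  - right; left; split; auto. apply Rmult_lt_reg_l in B; auto.
  - right; right; split; auto. split; auto. apply Rmult_eq_reg_l in B; lra.
  - right; left; split; auto. apply Rmult_lt_compat_l; auto.
  - right; right; split; auto. split; auto. rewrite B; auto.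
Qed.

Lemma succ_largest_sim P : P <> [] -> mP P <> 1%nat -> kP P = 1%nat ->
  succ_largest (map h P) = h (succ_largest P).
Proof.
  intros Hne Hm Hk. apply succ_largest_eq. destruct (succ_largest_spec P Hne Hm Hk) as [H1 H2].
  split; [apply in_map; auto|]. intros q' Hq' N. apply in_map_iff in Hq' as [x [<- Hx]].
  apply succP_sim; auto. apply H2; auto. intros ->; auto.
Qed.

End Sim2.

(** * Odd configurations with two distinct points are asymmetric *)

(* With two distinct points, a non-trivial symmetry must swap them (it cannot
   fix either), so they have equal multiplicity and |P| is even.  Hence for
   odd |P| the ambiguous rule (1) of 2gat (m_P = 2, k_P = 2) never applies. *)
Lemma count_two (P : list pt) x y : x <> y -> (forall z, In z P -> z = x \/ z = y) ->
  (mult P x + mult P y = length P)%nat.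
Proof.
  unfold mult. intros Nxy. induction P as [|a P IH]; simpl; auto. intros H.
  destruct (H a (or_introl eq_refl)) as [->| ->].
  - destruct (pt_eq_dec x x); [|congruence]. destruct (pt_eq_dec x y); [congruence|].
    rewrite <- IH by (intros; apply H; right; auto); lia.
  - destruct (pt_eq_dec y x); [congruence|]. destruct (pt_eq_dec y y); [|congruence].
    rewrite <- IH by (intros; apply H; right; auto); lia.
Qed.

Lemma mP_two P : mP P = 2%nat -> exists x y, x <> y /\ In x P /\ In y P /\ forall z, In z P -> z = x \/ z = y.
Proof.
  unfold mP. intros H. assert (Hnd := NoDup_nodup pt_eq_dec P).
  destruct (nodup pt_eq_dec P) as [|x [|y [|w L]]] eqn:E; simpl in H; try lia.
  exists x, y. inversion Hnd; subst. split; [intros ->; apply H2; left; auto|].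
  split; [apply (nodup_In pt_eq_dec); rewrite E; left; auto|].
  split; [apply (nodup_In pt_eq_dec); rewrite E; right; left; auto|].
  intros z Hz. rewrite <- (nodup_In pt_eq_dec), E in Hz. simpl in Hz. intuition.
Qed.

Lemma mP_two_k1 P : Nat.Odd (length P) -> mP P = 2%nat -> kP P = 1%nat.
Proof.
  intros Hodd Hm. assert (Hne : P <> []) by (intros ->; discriminate).
  destruct (Nat.eq_dec (kP P) 1) as [|Nk]; auto. exfalso.
  destruct (kP_ne1_nontrivial P Hne ltac:(lia) Nk) as [[c0 s0] [[Hu [H1 [H2 H3]]] N]]. cbn [fst snd] in *.
  destruct (mP_two P Hm) as [x [y [Nxy [Hx [Hy Hall]]]]].
  set (rho := rot_about (oP P) c0 s0) in *.
  assert (Nid : ~ (c0 = 1 /\ s0 = 0)) by (intros [-> ->]; auto).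
  assert (Fix : forall z, rho z = z -> z = oP P).
  { intros z Ez. destruct (pt_eq_dec z (oP P)); auto. exfalso; apply Nid. eapply rot_fix; eauto. }
  assert (Rx : rho x = y).
  { destruct (Hall (rho x) (H1 x Hx)) as [E|E]; auto. exfalso.
    destruct (Hall (rho y) (H1 y Hy)) as [E'|E'].
    - apply Nxy. apply (rot_inj (oP P) c0 s0); auto. fold rho. congruence.
    - apply Fix in E. apply Fix in E'. congruence. }
  pose proof (H3 x Hx) as Mx. rewrite Rx in Mx.
  pose proof (count_two P x y Nxy Hall). destruct Hodd as [k Hk]. lia.
Qed.

(** * Every robot computes the same global target *)

Definition Tgt (P : list pt) : pt :=
  if Nat.eqb (mP P) 1 then hd origin P
  else if Nat.eqb (kP P) 1 then succ_largest P else oP P.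

Lemma kP_pos P : P <> [] -> mP P <> 1%nat -> (1 <= kP P)%nat.
Proof.
  intros Hne Hm. destruct (kP_spec P Hne Hm) as [L [_ [Hl HL]]].
  assert (In (1,0) L) by (apply HL, id_in_group). destruct L; [destruct H|]. simpl in Hl; lia.
Qed.

Lemma mP_pos P : P <> [] -> (1 <= mP P)%nat.
Proof.
  intros Hne. unfold mP. destruct P as [|p P]; [congruence|].
  assert (In p (nodup pt_eq_dec (p::P))) by (apply nodup_In; left; auto).
  destruct (nodup pt_eq_dec (p::P)); [destruct H| simpl; lia].
Qed.

Lemma twogat_sim l c s b P a : simOK l c s -> P <> [] -> Nat.Odd (length P) -> In a P ->
  sim l c s b a = origin -> twogat (map (sim l c s b) P) = sim l c s b (Tgt P).
Proof.
  intros Hok Hne Hodd Ha Eha. unfold twogat, Tgt. rewrite mP_sim, kP_sim by auto.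
  destruct (Nat.eqb_spec (mP P) 1) as [E1|N1]; cbn [orb].
  - rewrite <- Eha. f_equal. destruct P as [|p P]; [congruence|]. simpl. apply (mP_one_all_eq (p::P)); simpl; auto.
  - pose proof (mP_pos P Hne). pose proof (kP_pos P Hne N1).
    replace (Nat.leb 2 (mP P)) with true by (symmetry; apply Nat.leb_le; lia).
    destruct (Nat.eqb_spec (mP P) 2) as [E2|N2].
    + rewrite (mP_two_k1 P Hodd E2). cbn [Nat.eqb andb orb].
      apply succ_largest_sim; auto. apply mP_two_k1; auto.
    + cbn [andb orb]. destruct (Nat.eqb_spec (kP P) 1) as [E3|N3].
      * apply succ_largest_sim; auto.
      * replace (Nat.leb 3 (mP P)) with true by (symmetry; apply Nat.leb_le; lia).
        replace (Nat.leb 2 (kP P)) with true by (symmetry; apply Nat.leb_le; lia). cbn [andb].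
        apply (oP_sim l c s b Hok P Hne).
Qed.

Definition frame_b (F : frame) (a : pt) : pt :=
  (- (fcos F * fst a + fsin F * snd a) / fscale F, - (- fsin F * fst a + fcos F * snd a) / fscale F).

Lemma frame_sim F a p : valid_frame F ->
  to_local F (psub p a) = sim (/ fscale F) (fcos F) (- fsin F) (frame_b F a) p.
Proof.
  intros [Hs Hc]. destruct p, a; unfold to_local, psub, sim, frame_b; cbn [fst snd].
  f_equal; field; lra.
Qed.

Lemma frame_simOK F : valid_frame F -> simOK (/ fscale F) (fcos F) (- fsin F).
Proof. intros [Hs Hc]; split; [apply Rinv_0_lt_compat; auto| nra]. Qed.

Lemma frame_back F a X : valid_frame F -> padd a (to_global F (to_local F (psub X a))) = X.
Proof.
  intros [Hs Hc]. destruct X, a; unfold padd, to_global, to_local, psub; cbn [fst snd].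
  f_equal.
  - transitivity (r1 + (fcos F ^2 + fsin F ^2) * (r - r1)); [field; lra| rewrite Hc; ring].
  - transitivity (r2 + (fcos F ^2 + fsin F ^2) * (r0 - r2)); [field; lra| rewrite Hc; ring].
Qed.

Lemma in_config n pos t i : (i < n)%nat -> In (pos t i) (config n pos t).
Proof. intros H. unfold config. apply in_map. apply in_seq. lia. Qed.

Lemma config_length n pos t : length (config n pos t) = n.
Proof. unfold config. rewrite length_map, length_seq. auto. Qed.

Lemma robot_move n pos F t i : valid_frame F -> Nat.Odd n -> (i < n)%nat ->
  padd (pos t i) (to_global F (twogat (local_view n pos F t i))) = Tgt (config n pos t).
Proof.
  intros HF Hodd Hi. unfold local_view.
  rewrite (map_ext _ _ (fun p => frame_sim F (pos t i) p HF)).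
  rewrite (twogat_sim _ _ _ _ _ (pos t i) (frame_simOK F HF)).
  - rewrite <- frame_sim by auto. apply frame_back; auto.
  - intros E. pose proof (in_config n pos t i Hi). rewrite E in H; destruct H.
  - rewrite config_length; auto.
  - apply in_config; auto.
  - rewrite <- frame_sim by auto. unfold psub, to_local, origin; cbn [fst snd]. f_equal; unfold Rdiv; ring.
Qed.

(** * The plane as the complex numbers *)

(* Points are identified with complex numbers: rotations about [o] become
   multiplication of [x - o] by a unit complex number. *)
Definition Cadd (a b : pt) : pt := (fst a + fst b, snd a + snd b).

Definition Cmul (a b : pt) : pt :=
  (fst a * fst b - snd a * snd b, fst a * snd b + snd a * fst b).

Definition Copp (a : pt) : pt := (- fst a, - snd a).

Definition Csub (a b : pt) : pt := Cadd a (Copp b).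

Definition C0 : pt := (0, 0).

Definition C1 : pt := (1, 0).

Lemma C_ring : ring_theory C0 C1 Cadd Cmul Csub Copp (@eq pt).
Proof.
  constructor; intros; unfold Cadd, Cmul, Copp, Csub, C0, C1;
    repeat match goal with x : pt |- _ => destruct x end; cbn [fst snd];
    unfold Cadd, Copp; cbn [fst snd]; f_equal; ring.
Qed.
Add Ring Cring : C_ring.

Fixpoint Cpow (z : pt) (n : nat) : pt :=
  match n with O => C1 | S k => Cmul z (Cpow z k) end.

Definition Cr (r : R) : pt := (r, 0).

Lemma Cr_add a b : Cr (a + b) = Cadd (Cr a) (Cr b).
Proof. unfold Cr, Cadd; cbn [fst snd]; f_equal; ring. Qed.

Lemma Cr_1 : Cr 1 = C1.
Proof. reflexivity. Qed.

Lemma Cr_inj a b : Cr a = Cr b -> a = b.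
Proof. unfold Cr; intros H; injection H; auto. Qed.

Lemma Cr_neq0 r : r <> 0 -> Cr r <> C0.
Proof. intros Hr E. apply Hr. unfold Cr, C0 in E. injection E; auto. Qed.

Lemma Cmul_integral a b : Cmul a b = C0 -> a = C0 \/ b = C0.
Proof.
  destruct a as [a1 a2], b as [b1 b2]. unfold Cmul, C0; cbn [fst snd].
  intros E. injection E as E1 E2.
  assert (H : (a1^2 + a2^2) * (b1^2 + b2^2) = 0).
  { transitivity ((a1 * b1 - a2 * b2)^2 + (a1 * b2 + a2 * b1)^2); [ring| rewrite E1, E2; ring]. }
  apply Rmult_integral in H as [H|H]; apply sumsq_eq0 in H as [H1 H2]; subst; auto.
Qed.

Lemma Cmul_neq0 a b : a <> C0 -> b <> C0 -> Cmul a b <> C0.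
Proof. intros Ha Hb E. apply Cmul_integral in E as [E|E]; auto. Qed.

Lemma Cpow_neq0 z n : z <> C0 -> Cpow z n <> C0.
Proof.
  intros Hz. induction n as [|n IH]; simpl; [|apply Cmul_neq0; auto].
  unfold C1, C0. intros E; injection E; lra.
Qed.

Lemma Cpow_mul a b m : Cpow (Cmul a b) m = Cmul (Cpow a m) (Cpow b m).
Proof.
  induction m; simpl; [unfold C1, Cmul; cbn [fst snd]; f_equal; ring | rewrite IHm; ring].
Qed.

Lemma Cpow_add z m n : Cpow z (m + n) = Cmul (Cpow z m) (Cpow z n).
Proof. induction m; simpl; [ring | rewrite IHm; ring]. Qed.

Lemma Cpow2_eq1 z : Cpow z 2 = C1 -> z = C1 \/ z = (-1, 0).
Proof.
  intros E. assert (F : Cmul (Csub z C1) (Cadd z C1) = C0)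
    by (transitivity (Csub (Cpow z 2) C1); [simpl; ring | rewrite E; ring]).
  destruct z as [x y].
  apply Cmul_integral in F as [F|F]; unfold Csub, Cadd, Copp, C1, C0 in F;
    cbn [fst snd] in F; injection F as F1 F2; [left | right]; unfold C1; f_equal; lra.
Qed.

Lemma rot_C o c s x : Csub (rot_about o c s x) o = Cmul (c, s) (Csub x o).
Proof.
  destruct o, x; unfold Csub, Cadd, Copp, Cmul, rot_about, padd; cbn [fst snd]; f_equal; ring.
Qed.

Fixpoint csum (L : list pt) (f : pt -> pt) : pt :=
  match L with [] => C0 | x :: L' => Cadd (f x) (csum L' f) end.

Lemma csum_add L f g : csum L (fun x => Cadd (f x) (g x)) = Cadd (csum L f) (csum L g).
Proof. induction L; simpl; [unfold C0, Cadd; cbn [fst snd]; f_equal; ring|]. rewrite IHL. ring. Qed.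

Lemma csum_opp L f : csum L (fun x => Copp (f x)) = Copp (csum L f).
Proof. induction L; simpl; [unfold C0, Copp; cbn [fst snd]; f_equal; ring|]. rewrite IHL. ring. Qed.

Lemma csum_scal L k f : csum L (fun x => Cmul k (f x)) = Cmul k (csum L f).
Proof. induction L; simpl; [unfold C0, Cmul; cbn [fst snd]; f_equal; ring|]. rewrite IHL. ring. Qed.

Lemma csum_ext L f g : (forall x, In x L -> f x = g x) -> csum L f = csum L g.
Proof. induction L; simpl; intros H; auto. rewrite H, IHL; auto. Qed.

Lemma csum_perm L L' f : Permutation L L' -> csum L f = csum L' f.
Proof. induction 1; simpl; auto; try congruence. ring. Qed.

Lemma csum_map L g f : csum (map g L) f = csum L (fun x => f (g x)).
Proof. induction L; simpl; congruence. Qed.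

Lemma csum_const L k : csum L (fun _ => k) = Cmul (Cr (INR (length L))) k.
Proof.
  induction L; [simpl; unfold Cr, C0, Cmul; cbn [fst snd]; f_equal; ring|].
  cbn [csum length]. rewrite IHL, S_INR, Cr_add, Cr_1. ring.
Qed.

Lemma csum_filter L (P : pt -> bool) f :
  csum (filter P L) f = csum L (fun x => if P x then f x else C0).
Proof. induction L; simpl; auto. destruct (P a); simpl; rewrite IHL; auto. ring. Qed.

Lemma csum_zero L f : (forall x, In x L -> f x = C0) -> csum L f = C0.
Proof. induction L; simpl; intros H; auto. rewrite H, IHL; auto. ring. Qed.

Lemma csum_ind U a v : NoDup U -> In a U ->
  csum U (fun x => if pt_eq_dec x a then v else C0) = v.
Proof.
  induction 1 as [|b U Hb HU IH]; [intros []|]. intros [->|Ha]; simpl.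
  - destruct (pt_eq_dec a a); [|congruence]. rewrite csum_zero; [ring|].
    intros x Hx. destruct (pt_eq_dec x a); auto. subst; contradiction.
  - destruct (pt_eq_dec b a); [subst; contradiction|]. rewrite IH; auto. ring.
Qed.

Definition psum (U : list pt) (b : pt -> bool) (o : pt) (k : nat) : pt :=
  csum U (fun x => if b x then Cpow (Csub x o) k else C0).

Lemma psum0 U b o : psum U b o 0 = Cr (INR (length (filter b U))).
Proof. unfold psum. simpl. rewrite <- csum_filter, csum_const. ring. Qed.

(* Small integers in C, written so that [ring] sees their values. *)
Notation C2 := (Cadd C1 C1).
Notation C3 := (Cadd C1 C2).
Notation C5 := (Cadd C2 C3).
Notation C10 := (Cadd C5 C5).

Lemma psum_shift2 U b o d :
  psum U b (Cadd o d) 2 =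
  Cadd (Csub (psum U b o 2) (Cmul C2 (Cmul d (psum U b o 1))))
       (Cmul (Cpow d 2) (psum U b o 0)).
Proof.
  unfold psum; induction U; cbn [csum]; [ring|].
  destruct (b a); rewrite IHU; cbn [Cpow]; ring.
Qed.

Lemma psum_shift3 U b o d :
  psum U b (Cadd o d) 3 =
  Csub (Cadd (Csub (psum U b o 3) (Cmul C3 (Cmul d (psum U b o 2))))
             (Cmul C3 (Cmul (Cpow d 2) (psum U b o 1))))
       (Cmul (Cpow d 3) (psum U b o 0)).
Proof.
  unfold psum; induction U; cbn [csum]; [ring|].
  destruct (b a); rewrite IHU; cbn [Cpow]; ring.
Qed.

Lemma psum_shift5 U b o d :
  psum U b (Cadd o d) 5 =
  Csub (Cadd (Csub (Cadd (Csub (psum U b o 5) (Cmul C5 (Cmul d (psum U b o 4))))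
                         (Cmul C10 (Cmul (Cpow d 2) (psum U b o 3))))
                   (Cmul C10 (Cmul (Cpow d 3) (psum U b o 2))))
             (Cmul C5 (Cmul (Cpow d 4) (psum U b o 1))))
       (Cmul (Cpow d 5) (psum U b o 0)).
Proof.
  unfold psum; induction U; cbn [csum]; [ring|].
  destruct (b a); rewrite IHU; cbn [Cpow]; ring.
Qed.

(** * Power sums and parity of rotationally symmetric multisets *)

Definition symm (L : list pt) (o : pt) (c s : R) : Prop :=
  c^2 + s^2 = 1 /\ (c, s) <> (1, 0) /\
  (forall q, In q L -> In (rot_about o c s q) L) /\
  (forall q, In q L -> mult L (rot_about o c s q) = mult L q).

Definition level (L : list pt) (t : nat) (x : pt) : bool := Nat.leb t (mult L x).

Lemma mult_pos_In L x : (1 <= mult L x)%nat -> In x L.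
Proof. intros H. apply (count_occ_In pt_eq_dec). unfold mult in H. lia. Qed.

Lemma In_mult_pos L x : In x L -> (1 <= mult L x)%nat.
Proof. intros H. apply (count_occ_In pt_eq_dec) in H. unfold mult. lia. Qed.

Lemma Permutation_of_incl (A B : list pt) :
  NoDup A -> NoDup B -> incl A B -> (length B <= length A)%nat -> Permutation A B.
Proof.
  intros HA HB Hi Hl. apply NoDup_Permutation; auto. intros x; split; intro H; auto.
  eapply NoDup_length_incl; eauto.
Qed.

(* Each level set of a symmetric multiset is permuted by the rotation
   x - o |-> ω (x - o), ω = c + is, so its k-th power sum about [o] is
   multiplied by ω^k; it vanishes unless ω^k = 1. *)
Lemma psum_level_symm (L U : list pt) o c s t k : NoDup U -> incl L U -> (1 <= t)%nat ->
  symm L o c s -> Cpow (c, s) k <> C1 -> psum U (level L t) o k = C0.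
Proof.
  intros HU HLU Ht [Hcs [Hne [H1 H2]]] Hk. unfold psum. rewrite <- csum_filter.
  set (S := filter (level L t) U).
  set (rho := rot_about o c s).
  assert (HS : forall x, In x S <-> In x U /\ (t <= mult L x)%nat).
  { intros x. unfold S, level. rewrite filter_In, Nat.leb_le. tauto. }
  assert (Hp : Permutation (map rho S) S).
  { apply Permutation_of_incl.
    - apply NoDup_map_inj; [intros; eapply rot_inj; eauto| apply NoDup_filter; auto].
    - apply NoDup_filter; auto.
    - intros y Hy. apply in_map_iff in Hy as [x [<- Hx]]. apply HS in Hx as [HxU Hxt].
      assert (HxL : In x L) by (apply mult_pos_In; lia).
      apply HS. split; [apply HLU; apply H1; auto| unfold rho; rewrite H2; auto].
    - rewrite length_map; auto. }
  set (g := fun x => Cpow (Csub x o) k).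
  assert (E : csum S g = Cmul (Cpow (c, s) k) (csum S g)).
  { transitivity (csum (map rho S) g); [symmetry; apply csum_perm; auto|].
    rewrite csum_map, <- csum_scal. apply csum_ext. intros x _.
    unfold g, rho. rewrite rot_C, Cpow_mul. auto. }
  assert (E2 : Cmul (Csub C1 (Cpow (c, s) k)) (csum S g) = C0).
  { transitivity (Csub (csum S g) (Cmul (Cpow (c, s) k) (csum S g))); [ring|].
    rewrite <- E. ring. }
  apply Cmul_integral in E2 as [E2|E2]; auto. exfalso. apply Hk.
  transitivity (Csub C1 (Csub C1 (Cpow (c, s) k))); [ring| rewrite E2; ring].
Qed.

Definition half_turn (o : pt) : pt -> pt := rot_about o (-1) 0.

Lemma half_turn_involutive o x : half_turn o (half_turn o x) = x.
Proof. destruct o, x; unfold half_turn, rot_about, padd; cbn [fst snd]; f_equal; ring. Qed.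

Lemma half_turn_permutes L o : symm L o (-1) 0 -> Permutation (map (half_turn o) L) L.
Proof.
  intros [_ [_ [H1 H2]]]. set (sg := half_turn o).
  assert (Hinj : forall x y, sg x = sg y -> x = y).
  { intros x y E. apply (f_equal sg) in E. unfold sg in E.
    rewrite !half_turn_involutive in E. exact E. }
  apply (Permutation_count_occ pt_eq_dec). intros y.
  rewrite <- (half_turn_involutive o y) at 1. fold sg.
  rewrite <- (@count_occ_map pt pt sg pt_eq_dec pt_eq_dec Hinj).
  fold (mult L (sg y)). fold (mult L y).
  destruct (in_dec pt_eq_dec y L) as [Hy|Hy]; [apply H2; auto|].
  assert (~ In (sg y) L)
    by (intros Hs; apply Hy; rewrite <- (half_turn_involutive o y); apply H1; auto).
  unfold mult. rewrite !(proj1 (count_occ_not_In pt_eq_dec _ _)); auto.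
Qed.

(* Points lexicographically above [o]; the half-turn exchanges them with the
   points below [o]. *)
Definition above (o x : pt) : bool :=
  if excluded_middle_informative (pt_lt o x) then true else false.

Lemma half_turn_above o x : x <> o -> negb (above o x) = above o (half_turn o x).
Proof.
  intros Nx. unfold above.
  destruct (excluded_middle_informative (pt_lt o x)) as [A|A];
    destruct (excluded_middle_informative (pt_lt o (half_turn o x))) as [B|B];
    simpl; auto; exfalso;
    destruct o as [o1 o2], x as [x1 x2]; unfold half_turn, rot_about, padd, pt_lt in *;
    cbn [fst snd] in *.
  - lra.
  - apply Nx. destruct (Rtotal_order o1 x1) as [C|[C|C]]; [lra| |lra]. subst.
    destruct (Rtotal_order o2 x2) as [D|[D|D]]; [lra| subst; auto| lra].
Qed.

Lemma Permutation_filter {A} (f : A -> bool) l l' :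
  Permutation l l' -> Permutation (filter f l) (filter f l').
Proof.
  induction 1; simpl; auto.
  - destruct (f x); auto.
  - destruct (f x), (f y); auto. apply perm_swap.
  - eapply perm_trans; eauto.
Qed.

(* Parity: a half-turn symmetric multiset avoiding its centre pairs up its
   points, so it has even size. *)
Lemma half_turn_even (L : list pt) o : symm L o (-1) 0 -> mult L o = 0%nat -> Nat.Even (length L).
Proof.
  intros Hsym Ho. pose proof (half_turn_permutes L o Hsym) as Hp.
  assert (Hnot : forall x, In x L -> x <> o).
  { intros x Hx ->. pose proof (In_mult_pos L o Hx). lia. }
  rewrite <- (filter_length (above o) L).
  assert (E : length (filter (fun x => negb (above o x)) L) = length (filter (above o) L)).
  { rewrite (filter_ext_in _ (fun x => above o (half_turn o x)))
      by (intros x Hx; apply half_turn_above, Hnot; auto).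
    rewrite <- (Permutation_length (Permutation_filter (above o) _ _ Hp)).
    rewrite filter_map_swap, length_map. auto. }
  rewrite E. exists (length (filter (above o) L)). lia.
Qed.

Definition nsum {A} (U : list A) (f : A -> nat) : nat := list_sum (map f U).

Lemma nsum_cons {A} a (U : list A) f : nsum (a :: U) f = (f a + nsum U f)%nat.
Proof. reflexivity. Qed.

Lemma nsum_app {A} (U1 U2 : list A) f : nsum (U1 ++ U2) f = (nsum U1 f + nsum U2 f)%nat.
Proof. unfold nsum. rewrite map_app, list_sum_app. auto. Qed.

Lemma nsum_add {A} (U : list A) f g : nsum U (fun x => f x + g x)%nat = (nsum U f + nsum U g)%nat.
Proof. induction U; [reflexivity|]. rewrite !nsum_cons, IHU. lia. Qed.

Lemma nsum_ext {A} (U : list A) f g : (forall x, In x U -> f x = g x) -> nsum U f = nsum U g.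
Proof.
  induction U; intros H; [reflexivity|].
  rewrite !nsum_cons, H, IHU; [auto | intros; apply H; right; auto | left; auto].
Qed.

Lemma nsum_zero {A} (U : list A) f : (forall x, In x U -> f x = 0%nat) -> nsum U f = 0%nat.
Proof.
  induction U; intros H; [reflexivity|].
  rewrite nsum_cons, H, IHU; [auto | intros; apply H; right; auto | left; auto].
Qed.

Lemma nsum_zero_inv {A} (U : list A) f : nsum U f = 0%nat -> forall x, In x U -> f x = 0%nat.
Proof.
  induction U; simpl; [tauto|]. rewrite nsum_cons. intros H x [->|Hx]; [lia|].
  apply IHU; auto; lia.
Qed.

Lemma nsum_ge {A} (U : list A) f x : In x U -> (f x <= nsum U f)%nat.
Proof.
  induction U; simpl; [tauto|]. rewrite nsum_cons. intros [->|H]; [lia|].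
  specialize (IHU H); lia.
Qed.

Lemma nsum_exchange {A B} (T : list A) (U : list B) (g : A -> B -> nat) :
  nsum T (fun t => nsum U (g t)) = nsum U (fun x => nsum T (fun t => g t x)).
Proof.
  induction T as [|t T IH].
  - symmetry. apply nsum_zero. intros; reflexivity.
  - rewrite nsum_cons, IH, <- nsum_add. reflexivity.
Qed.

Lemma nsum_indicator_length {A} (U : list A) (b : A -> bool) :
  nsum U (fun x => if b x then 1 else 0)%nat = length (filter b U).
Proof. induction U; [reflexivity|]. rewrite nsum_cons, IHU. simpl. destruct (b a); simpl; lia. Qed.

Lemma nsum_seq_ge_len a k f :
  (forall t, (a <= t < a + k)%nat -> (1 <= f t)%nat) -> (k <= nsum (seq a k) f)%nat.
Proof.
  revert a. induction k; intros a H; simpl; [lia|]. rewrite nsum_cons.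
  pose proof (H a ltac:(lia)). pose proof (IHk (S a) ltac:(intros; apply H; lia)). lia.
Qed.

Lemma nsum_interval a b N :
  nsum (seq 1 N) (fun t => if andb (Nat.ltb a t) (Nat.leb t b) then 1 else 0)%nat =
  (Nat.min b N - Nat.min a N)%nat.
Proof.
  induction N.
  - simpl. unfold nsum; simpl. lia.
  - rewrite seq_S, nsum_app, IHN. unfold nsum at 1. cbn [map list_sum].
    replace (1 + N)%nat with (S N) by lia.
    destruct (Nat.ltb_spec a (S N)), (Nat.leb_spec (S N) b); simpl; lia.
Qed.

Lemma nsum_point (U : list pt) a k : NoDup U -> In a U ->
  nsum U (fun x => if pt_eq_dec x a then k else 0%nat) = k.
Proof.
  induction 1 as [|b U Hb HU IH]; [intros []|]. intros [->|Ha]; rewrite nsum_cons.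
  - destruct (pt_eq_dec a a); [|congruence]. rewrite nsum_zero; [lia|].
    intros x Hx. destruct (pt_eq_dec x a); auto. subst; contradiction.
  - destruct (pt_eq_dec b a); [subst; contradiction|]. rewrite IH; auto.
Qed.

Lemma nsum_split_point (U : list pt) f o : NoDup U -> In o U ->
  nsum U f = (f o + nsum U (fun x => if pt_eq_dec x o then 0 else f x))%nat.
Proof.
  intros HU Ho. rewrite <- (nsum_point U o (f o)) by auto. rewrite <- nsum_add.
  apply nsum_ext. intros x _. destruct (pt_eq_dec x o); subst; lia.
Qed.

Lemma mult_cons a L x : mult (a :: L) x = ((if pt_eq_dec a x then 1 else 0) + mult L x)%nat.
Proof. unfold mult; simpl. destruct (pt_eq_dec a x); auto. Qed.

Lemma length_nsum_mult U L : NoDup U -> incl L U -> length L = nsum U (mult L).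
Proof.
  intros HU. induction L as [|a L IH]; intros Hi.
  - simpl. symmetry. apply nsum_zero. intros; reflexivity.
  - simpl length.
    rewrite (nsum_ext U (mult (a::L)) (fun x => (if pt_eq_dec x a then 1 else 0) + mult L x)%nat).
    + rewrite nsum_add, nsum_point, <- IH; auto;
        [intros y Hy; apply Hi; right; auto | apply Hi; left; auto].
    + intros x _. rewrite mult_cons.
      destruct (pt_eq_dec a x), (pt_eq_dec x a); subst; try congruence; auto.
Qed.

(** * One step of the execution: some robots move onto a common point *)

Definition step_to (q : pt) (P P' : list pt) : Prop :=
  Forall2 (fun a b => b = a \/ b = q) P P'.

Lemma step_length q P P' : step_to q P P' -> length P' = length P.
Proof. intros H. symmetry. eapply Forall2_length; eauto. Qed.

Lemma step_In q P P' x : step_to q P P' -> In x P' -> In x P \/ x = q.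
Proof.
  induction 1 as [|a b P0 P0' Hab Hrest IH]; simpl; [tauto|].
  intros [<-|Hx]; [destruct Hab; auto|]. destruct (IH Hx); auto.
Qed.

Lemma step_mult_le q P P' x : step_to q P P' -> x <> q -> (mult P' x <= mult P x)%nat.
Proof.
  intros Hstep Nx. induction Hstep as [|a b P0 P0' Hab Hrest IH]; [simpl; lia|].
  rewrite !mult_cons. destruct Hab as [->| ->]; [lia|].
  destruct (pt_eq_dec q x); [congruence|]. lia.
Qed.

Lemma step_mult_target_le q P P' : step_to q P P' -> (mult P q <= mult P' q)%nat.
Proof.
  induction 1 as [|a b L L' Hab Hr IH]; [simpl; lia|]. rewrite !mult_cons.
  destruct Hab as [-> | ->]; [lia|].
  destruct (pt_eq_dec q q); [|congruence]. destruct (pt_eq_dec a q); lia.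
Qed.

Lemma step_mult_target_lt q P P' : step_to q P P' -> P' <> P -> (mult P q < mult P' q)%nat.
Proof.
  induction 1 as [|a b P0 P0' Hab Hr IH]; [congruence|]. intros N. rewrite !mult_cons.
  pose proof (step_mult_target_le _ _ _ Hr) as Hle.
  destruct Hab as [-> | ->].
  - assert (P0' <> P0) by congruence. specialize (IH H). lia.
  - destruct (pt_eq_dec q q); [|congruence].
    destruct (pt_eq_dec a q) as [->|Na]; [|lia].
    assert (P0' <> P0) by congruence. specialize (IH H). lia.
Qed.

Lemma step_gathered q P P' : (forall x, In x P -> x = q) -> step_to q P P' -> P' = P.
Proof.
  intros Hall HF. induction HF as [|a b L L' Hab Hr IH]; auto. f_equal.
  - destruct Hab as [->| ->]; auto. symmetry; apply Hall; left; auto.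
  - apply IH. intros; apply Hall; right; auto.
Qed.

(** * Claim C: consecutive symmetric configurations share their centre *)

(* Sums range over the duplicate-free list U of the
   points of [o :: P], which contains the supports of P and P'. *)
Section ClaimC.
Variables (P P' : list pt) (o o' : pt) (c s c' s' : R).
Hypothesis Hstep : step_to o P P'.
Hypothesis Hodd : Nat.Odd (length P).
Hypothesis Hm3 : (3 <= mP P)%nat.
Hypothesis Hsym : symm P o c s.
Hypothesis Hsym' : symm P' o' c' s'.

Let U := nodup pt_eq_dec (o :: P).

Lemma U_nodup : NoDup U.
Proof. apply NoDup_nodup. Qed.

Lemma U_o : In o U.
Proof. apply nodup_In. left; auto. Qed.

Lemma U_P : incl P U.
Proof. intros x Hx. apply nodup_In. right; auto. Qed.

Lemma U_P' : incl P' U.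
Proof.
  intros x Hx. destruct (step_In o P P' x Hstep Hx) as [H| ->]; [apply U_P; auto | apply U_o].
Qed.

Definition moved : nat :=
  nsum U (fun x => if pt_eq_dec x o then 0 else mult P x - mult P' x)%nat.

Lemma mult_o_gain : mult P' o = (mult P o + moved)%nat.
Proof.
  pose proof (length_nsum_mult U P U_nodup U_P) as A.
  pose proof (length_nsum_mult U P' U_nodup U_P') as B.
  rewrite (step_length _ _ _ Hstep) in B.
  rewrite (nsum_split_point U _ o U_nodup U_o) in A.
  rewrite (nsum_split_point U _ o U_nodup U_o) in B.
  rewrite (nsum_ext U (fun x => if pt_eq_dec x o then 0%nat else mult P x)
     (fun x => (if pt_eq_dec x o then 0 else mult P x - mult P' x) +
               (if pt_eq_dec x o then 0 else mult P' x))%nat) in A.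
  - rewrite nsum_add in A. unfold moved. lia.
  - intros x _. destruct (pt_eq_dec x o) as [|Nx]; auto.
    pose proof (step_mult_le _ _ _ x Hstep Nx). lia.
Qed.

Definition departs (t : nat) (x : pt) : bool :=
  andb (if pt_eq_dec x o then false else true)
       (andb (Nat.ltb (mult P' x) t) (Nat.leb t (mult P x))).

Definition departures (t : nat) : nat := nsum U (fun x => if departs t x then 1 else 0)%nat.

Lemma departures_total : nsum (seq 1 (length P)) departures = moved.
Proof.
  unfold departures. rewrite nsum_exchange. unfold moved. apply nsum_ext. intros x Hx.
  unfold departs. destruct (pt_eq_dec x o) as [|Nx]; simpl.
  - apply nsum_zero. auto.
  - rewrite nsum_interval. unfold mult. pose proof (count_occ_bound pt_eq_dec x P).
    pose proof (step_mult_le _ _ _ x Hstep Nx). unfold mult in H0. lia.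
Qed.

Let dl := Csub o' o.

(* Level sets of P' lose exactly the departing points, and the centroid of
   level t of P (resp. P') is o (resp. o'), so
   |level t of P'| · (o' - o) = - Σ_{x departs at level t} (x - o). *)
Lemma level_shift t : (1 <= t)%nat ->
  Cmul (Cr (INR (length (filter (level P' t) U)))) dl = Copp (psum U (departs t) o 1).
Proof.
  intros Ht. destruct Hsym as [Hcs [Hne _]]. destruct Hsym' as [Hcs' [Hne' _]].
  assert (Hnot1 : forall c0 s0, (c0, s0) <> (1, 0) -> Cpow (c0, s0) 1 <> C1)
    by (intros c0 s0 N; simpl; unfold C1; intros E; apply N; rewrite <- E; unfold Cmul; cbn; f_equal; ring).
  set (A := psum U (level P' t) o 1).
  assert (E1 : A = Cmul (Cr (INR (length (filter (level P' t) U)))) dl).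
  { unfold A, psum.
    rewrite (csum_ext U _ (fun x => Cadd (if level P' t x then Cpow (Csub x o') 1 else C0)
                                         (if level P' t x then dl else C0))).
    - rewrite csum_add. fold (psum U (level P' t) o' 1).
      rewrite (psum_level_symm P' U o' c' s' t 1 U_nodup U_P' Ht Hsym' (Hnot1 _ _ Hne')).
      rewrite <- csum_filter, csum_const. ring.
    - intros x _. destruct (level P' t x); unfold dl; simpl; ring. }
  assert (E2 : A = Csub (psum U (level P t) o 1) (psum U (departs t) o 1)).
  { unfold A, psum. match goal with |- _ = Csub ?X ?Y => change (Csub X Y) with (Cadd X (Copp Y)) end.
    rewrite <- csum_opp, <- csum_add. apply csum_ext. intros x _.
    unfold departs, level. destruct (pt_eq_dec x o) as [->|Nx]; simpl.
    - destruct (Nat.leb t (mult P' o)), (Nat.leb t (mult P o)); ring.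
    - pose proof (step_mult_le _ _ _ x Hstep Nx).
      destruct (Nat.leb_spec t (mult P' x)), (Nat.ltb_spec (mult P' x) t),
        (Nat.leb_spec t (mult P x)); simpl; try lia; ring. }
  rewrite (psum_level_symm P U o c s t 1 U_nodup U_P Ht Hsym (Hnot1 _ _ Hne)) in E2.
  rewrite <- E1, E2. ring.
Qed.

Section Shifted.
Hypothesis Hshift : o' <> o.

Lemma dl_neq0 : dl <> C0.
Proof.
  intros E. apply Hshift. unfold dl, Csub, Cadd, Copp, C0 in E.
  destruct o, o'; cbn [fst snd] in E. injection E as E1 E2. f_equal; lra.
Qed.

Lemma departures_pos t : (1 <= t)%nat ->
  (1 <= length (filter (level P' t) U))%nat -> (1 <= departures t)%nat.
Proof.
  intros Ht Hlen. destruct (Nat.eq_dec (departures t) 0) as [E|E]; [|lia]. exfalso.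
  pose proof (nsum_zero_inv U _ E) as Z.
  pose proof (level_shift t Ht) as K. unfold psum in K. rewrite csum_zero in K.
  - replace (Copp C0) with C0 in K by ring.
    apply Cmul_integral in K as [K|K]; [|apply dl_neq0; exact K].
    unfold Cr, C0 in K. injection K as K. change 0 with (INR 0) in K. apply INR_eq in K. lia.
  - intros x Hx. specialize (Z x Hx). simpl in Z. destruct (departs t x); [lia | auto].
Qed.

Lemma level_nonempty t : (1 <= t)%nat -> (In o P' /\ t <= mult P' o \/ t = 1)%nat ->
  (1 <= length (filter (level P' t) U))%nat.
Proof.
  intros Ht Hcase.
  assert (Hx : exists x, In x P' /\ (t <= mult P' x)%nat).
  { destruct Hcase as [[Ho Hto]| ->]; [exists o; auto|].
    destruct P' as [|b L] eqn:EP.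
    - pose proof (step_length _ _ _ Hstep). destruct Hodd; simpl in *; lia.
    - exists b. split; [left; auto | apply In_mult_pos; left; auto]. }
  destruct Hx as [x [HxP' Hxt]].
  assert (In x (filter (level P' t) U))
    by (apply filter_In; split; [apply U_P'; auto | apply Nat.leb_le; auto]).
  destruct (filter _ U); [destruct H | simpl; lia].
Qed.

(* Every level 1 .. mult P' o of P' is nonempty, so each has a departure;
   since only [moved] robots departed in total, [o] was empty before and
   exactly one point departs at level 1. *)
Lemma single_departure :
  mult P o = 0%nat /\ departures 1 = 1%nat /\ (1 <= mult P' o)%nat.
Proof.
  pose proof departures_total as HS. pose proof mult_o_gain as HC.
  set (N := length P) in *. set (j := mult P' o) in *.
  assert (HN : (1 <= N)%nat) by (destruct Hodd as [k Hk]; unfold N; lia).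
  assert (Hj : (j <= N)%nat)
    by (unfold j, N; rewrite <- (step_length _ _ _ Hstep); apply count_occ_bound).
  assert (D1 : (1 <= departures 1)%nat)
    by (apply departures_pos; auto; apply level_nonempty; auto).
  destruct j as [|j'] eqn:Ej.
  - exfalso. assert (moved = 0%nat) by lia.
    pose proof (nsum_ge (seq 1 N) departures 1%nat ltac:(apply in_seq; lia)). lia.
  - replace N with (S j' + (N - S j'))%nat in HS by lia.
    rewrite seq_app, nsum_app in HS. cbn [seq] in HS. rewrite nsum_cons in HS.
    assert (L : (j' <= nsum (seq 2 j') departures)%nat).
    { apply nsum_seq_ge_len. intros t Ht. apply departures_pos; [lia|].
      apply level_nonempty; [lia|]. left. split; [apply mult_pos_In|]; fold j; lia. }
    lia.
Qed.

Lemma departing_point : exists p1, In p1 U /\ departs 1 p1 = true /\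
  (forall x, In x U -> x <> p1 -> departs 1 x = false).
Proof.
  destruct single_departure as [_ [Hd1 _]].
  unfold departures in Hd1. rewrite nsum_indicator_length in Hd1.
  destruct (filter (departs 1) U) as [|p1 [|y L]] eqn:E; simpl in Hd1; try lia.
  assert (Hp1 : In p1 (filter (departs 1) U)) by (rewrite E; left; auto).
  apply filter_In in Hp1 as [Hp1U Hp1D].
  exists p1. split; [auto | split; [auto|]].
  intros x Hx Nx. destruct (departs 1 x) eqn:Ex; auto. exfalso.
  assert (In x (filter (departs 1) U)) by (apply filter_In; auto).
  rewrite E in H. destruct H as [<-|[]]; auto.
Qed.

(* Hence the support of P' is that of P with the point [p1] replaced by
   [o], and [p1] is determined by the shift of the centre. *)
Lemma support_exchange : exists p1, p1 <> o /\
  (forall f, csum U (fun x => if level P' 1 x then f x else C0) =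
             Cadd (csum U (fun x => if level P 1 x then f x else C0)) (Csub (f o) (f p1))) /\
  Cmul (Cr (INR (length (filter (level P' 1) U)))) dl = Copp (Csub p1 o).
Proof.
  destruct single_departure as [Ho0 [_ Ho']].
  destruct departing_point as [p1 [Hp1U [Hp1D Hother]]].
  pose proof Hp1D as Hp1. unfold departs in Hp1. destruct (pt_eq_dec p1 o) as [|Np1]; [discriminate|].
  destruct (Nat.ltb_spec (mult P' p1) 1), (Nat.leb_spec 1 (mult P p1));
    cbn [andb] in Hp1; try discriminate.
  exists p1. split; [auto | split].
  - intros f. rewrite <- (csum_ind U o (f o) U_nodup U_o), <- (csum_ind U p1 (f p1) U_nodup Hp1U).
    unfold Csub. rewrite <- csum_opp, <- !csum_add. apply csum_ext. intros x Hx.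
    unfold level. destruct (pt_eq_dec x o) as [->|Nx].
    + destruct (pt_eq_dec o p1); [congruence|].
      replace (Nat.leb 1 (mult P' o)) with true by (symmetry; apply Nat.leb_le; auto).
      replace (Nat.leb 1 (mult P o)) with false by (symmetry; apply Nat.leb_gt; lia). ring.
    + destruct (pt_eq_dec x p1) as [->|Np].
      * replace (Nat.leb 1 (mult P' p1)) with false by (symmetry; apply Nat.leb_gt; lia).
        replace (Nat.leb 1 (mult P p1)) with true by (symmetry; apply Nat.leb_le; auto). ring.
      * pose proof (Hother x Hx Np) as Dx. unfold departs in Dx.
        destruct (pt_eq_dec x o); [congruence|].
        pose proof (step_mult_le _ _ _ x Hstep Nx).
        destruct (Nat.leb_spec 1 (mult P' x)), (Nat.leb_spec 1 (mult P x)),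
          (Nat.ltb_spec (mult P' x) 1); cbn [andb] in Dx; try discriminate; try lia; ring.
  - rewrite (level_shift 1 ltac:(lia)). f_equal. unfold psum.
    rewrite (csum_ext U _ (fun x => if pt_eq_dec x p1 then Cpow (Csub p1 o) 1 else C0)).
    + rewrite csum_ind; [simpl; ring | apply U_nodup | auto].
    + intros x Hx. destruct (pt_eq_dec x p1) as [->|Np]; [rewrite Hp1D | rewrite Hother]; auto.
Qed.

(* The rotation ω of P is neither 1 nor the half-turn (P has odd size and
   avoids its centre), so ω and ω^2 differ from 1. *)
Lemma omega_pow12 : Cpow (c, s) 1 <> C1 /\ Cpow (c, s) 2 <> C1.
Proof.
  destruct single_departure as [Ho0 _].
  assert (Nhalf : (c, s) <> (-1, 0)).
  { intros E. injection E as -> ->. apply (Nat.Even_Odd_False (length P)); auto.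
    apply (half_turn_even P o); auto. }
  destruct Hsym as [_ [Hne _]].
  split.
  - simpl. replace (Cmul (c, s) C1) with (c, s) by (unfold Cmul, C1; cbn; f_equal; ring). auto.
  - intros E. destruct (Cpow2_eq1 _ E); auto.
Qed.

Lemma level1_size_P : length (filter (level P 1) U) = mP P.
Proof.
  apply Permutation_length, NoDup_Permutation;
    [apply NoDup_filter, U_nodup | apply NoDup_nodup |].
  intros x. rewrite filter_In, nodup_In. unfold level. rewrite Nat.leb_le. split.
  - intros [_ H]. apply mult_pos_In; auto.
  - intros H. split; [apply U_P; auto | apply In_mult_pos; auto].
Qed.

(* Power sums of P' about [o] in terms of those of P: the support swaps
   [p1] for [o], where a = p1 - o = -h (o' - o) and h = |supp P'| >= 3. *)
Lemma power_sums_after : exists h a, 3 <= h /\ a = Copp (Cmul (Cr h) dl) /\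
  psum U (level P' 1) o 0 = Cr h /\
  forall k, (1 <= k)%nat -> psum U (level P' 1) o k = Csub (psum U (level P 1) o k) (Cpow a k).
Proof.
  destruct support_exchange as [p1 [Np1 [Hex Hshift_p1]]].
  set (h := INR (length (filter (level P' 1) U))) in *.
  exists h, (Csub p1 o). split; [| split; [| split]].
  - assert (E : psum U (level P' 1) o 0 = psum U (level P 1) o 0)
      by (unfold psum; rewrite Hex; simpl; ring).
    rewrite !psum0, level1_size_P in E. apply Cr_inj in E. unfold h. rewrite E.
    replace 3 with (INR 3) by (simpl; ring). apply le_INR; auto.
  - rewrite Hshift_p1. ring.
  - apply psum0.
  - intros k Hk. unfold psum. rewrite Hex.
    replace (Csub o o) with C0 by ring.
    destruct k as [|k]; [lia|]. simpl. ring.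
Qed.

Lemma P_vanish k : Cpow (c, s) k <> C1 -> psum U (level P 1) o k = C0.
Proof. intros Hk. apply (psum_level_symm P U o c s 1 k U_nodup U_P); auto. Qed.

Lemma P'_vanish k : Cpow (c', s') k <> C1 -> psum U (level P' 1) (Cadd o dl) k = C0.
Proof.
  intros Hk. replace (Cadd o dl) with o' by (unfold dl; ring).
  apply (psum_level_symm P' U o' c' s' 1 k U_nodup U_P'); auto.
Qed.

(* Every case below ends with an identity K (o' - o)^m = 0 with K <> 0. *)
Lemma shift_absurd K m E : K <> C0 -> Cmul K (Cpow dl m) = E -> E = C0 -> False.
Proof.
  intros HK Hid HE. rewrite HE in Hid. apply (Cmul_neq0 _ _ HK (Cpow_neq0 _ m dl_neq0)). auto.
Qed.

Ltac real_poly :=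
  cbn [Cpow]; unfold Csub; unfold Cmul, Cadd, Copp, Cr, C1, C0; cbn [fst snd]; f_equal; ring.

(* If ω'^2 <> 1, the second power sum of P' about o' yields
   -h (h + 1) (o' - o)^2 = 0. *)
Lemma no_shift_generic : Cpow (c', s') 2 <> C1 -> False.
Proof.
  intros W2'. destruct power_sums_after as [h [a [Hh [Ha [T0 Tk]]]]].
  destruct omega_pow12 as [W1 W2].
  pose proof (P'_vanish 2 W2') as E.
  rewrite psum_shift2, T0, !Tk, (P_vanish 2 W2), (P_vanish 1 W1) in E by lia.
  subst a. match type of E with ?L = _ =>
    apply (shift_absurd (Copp (Cmul (Cr h) (Cadd (Cr h) C1))) 2 L) end; auto; [|cbn [Cpow]; ring].
  replace (Copp (Cmul (Cr h) (Cadd (Cr h) C1))) with (Cr (- (h * (h + 1)))) by real_poly.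
  apply Cr_neq0. nra.
Qed.

(* If ω' is the half-turn we use the third power sum, and also the fifth
   when ω is a cube root of unity (then ω^4 = ω and ω^5 = ω^2). *)
Lemma no_shift_half_turn : (c', s') = (-1, 0) -> False.
Proof.
  intros Hw'. destruct power_sums_after as [h [a [Hh [Ha [T0 Tk]]]]].
  destruct omega_pow12 as [W1 W2].
  assert (W3' : Cpow (c', s') 3 <> C1)
    by (rewrite Hw'; unfold C1, Cmul; simpl; intros E; injection E as E1 E2; lra).
  assert (W5' : Cpow (c', s') 5 <> C1)
    by (rewrite Hw'; unfold C1, Cmul; simpl; intros E; injection E as E1 E2; lra).
  pose proof (P'_vanish 3 W3') as E3.
  rewrite psum_shift3, T0, !Tk, (P_vanish 2 W2), (P_vanish 1 W1) in E3 by lia.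
  subst a. set (hc := Cr h) in *.
  destruct (pt_eq_dec (Cpow (c, s) 3) C1) as [Cube|W3].
  - assert (W4 : Cpow (c, s) 4 <> C1)
      by (change 4%nat with (3 + 1)%nat; rewrite Cpow_add, Cube;
          replace (Cmul C1 (Cpow (c, s) 1)) with (Cpow (c, s) 1) by ring; auto).
    assert (W5 : Cpow (c, s) 5 <> C1)
      by (change 5%nat with (3 + 2)%nat; rewrite Cpow_add, Cube;
          replace (Cmul C1 (Cpow (c, s) 2)) with (Cpow (c, s) 2) by ring; auto).
    pose proof (P'_vanish 5 W5') as E5.
    rewrite psum_shift5, T0, !Tk, (P_vanish 5 W5), (P_vanish 4 W4), (P_vanish 2 W2),
      (P_vanish 1 W1) in E5 by lia.
    set (K := Csub (Cadd (Cpow hc 5) (Cmul C5 (Cpow hc 4)))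
                   (Cadd (Cmul (Cadd C10 C10) (Cpow hc 2)) (Cmul (Cadd C10 (Cadd C5 C1)) hc))).
    match type of E5 with ?L5 = _ => match type of E3 with ?L3 = _ =>
      apply (shift_absurd K 5 (Csub L5 (Cmul (Cmul C10 (Cpow dl 2)) L3))) end end.
    + replace K with (Cr (h^5 + 5 * h^4 - 20 * h^2 - 16 * h)) by (unfold K, hc; real_poly).
      apply Cr_neq0. assert (0 < h^4 + 5 * h^3 - 20 * h - 16) by nra. nra.
    + unfold K. cbn [Cpow]. ring.
    + rewrite E5, E3. ring.
  - rewrite (P_vanish 3 W3) in E3.
    match type of E3 with ?L = _ =>
      apply (shift_absurd (Cmul hc (Cmul (Cadd hc C1) (Cadd hc C2))) 3 L) end;
      auto; [|cbn [Cpow]; ring].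
    replace (Cmul hc (Cmul (Cadd hc C1) (Cadd hc C2))) with (Cr (h * (h + 1) * (h + 2)))
      by (unfold hc; real_poly).
    apply Cr_neq0. nra.
Qed.

Lemma no_shift : False.
Proof.
  destruct (pt_eq_dec (Cpow (c', s') 2) C1) as [E|W2']; [|exact (no_shift_generic W2')].
  destruct (Cpow2_eq1 _ E) as [E1|E1]; [|exact (no_shift_half_turn E1)].
  destruct Hsym' as [_ [Hne' _]]. auto.
Qed.

End Shifted.

Lemma same_centre : o' = o.
Proof. destruct (pt_eq_dec o' o) as [|N]; [auto | destruct (no_shift N)]. Qed.

End ClaimC.

(** * The multiplicity of the target strictly increases *)

Lemma Tgt_single P x : mP P = 1%nat -> In x P -> Tgt P = x.
Proof.
  intros Hm Hx. unfold Tgt. rewrite Hm. simpl. destruct P as [|p P0]; [destruct Hx|].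
  apply (mP_one_all_eq (p :: P0)); simpl; auto.
Qed.

Lemma Tgt_asym P : mP P <> 1%nat -> kP P = 1%nat -> Tgt P = succ_largest P.
Proof. intros Hm Hk. unfold Tgt. rewrite (proj2 (Nat.eqb_neq _ _) Hm), Hk. auto. Qed.

Lemma Tgt_sym P : mP P <> 1%nat -> kP P <> 1%nat -> Tgt P = oP P.
Proof.
  intros Hm Hk. unfold Tgt. rewrite (proj2 (Nat.eqb_neq _ _) Hm), (proj2 (Nat.eqb_neq _ _) Hk).
  auto.
Qed.

Lemma nontrivial_symm P : P <> [] -> mP P <> 1%nat -> kP P <> 1%nat ->
  exists c s, symm P (oP P) c s.
Proof.
  intros Hne Hm Hk. destruct (kP_ne1_nontrivial P Hne Hm Hk) as [[c s] [[Hu [H1 [H2 H3]]] N]].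
  exists c, s. split; auto.
Qed.

Lemma mP_ge3 P : P <> [] -> Nat.Odd (length P) -> mP P <> 1%nat -> kP P <> 1%nat ->
  (3 <= mP P)%nat.
Proof.
  intros Hne Hodd Hm Hk. pose proof (mP_pos P Hne).
  destruct (Nat.eq_dec (mP P) 2) as [E|E]; [|lia]. exfalso. apply Hk. apply mP_two_k1; auto.
Qed.

(* A point of strictly maximal multiplicity is the target: it is the largest
   point if k_P = 1, and it is fixed by every symmetry, hence is o_P,
   otherwise. *)
Lemma Tgt_strict_max P q : P <> [] -> In q P ->
  (forall x, In x P -> x <> q -> (mult P x < mult P q)%nat) -> Tgt P = q.
Proof.
  intros Hne Hq H. destruct (Nat.eq_dec (mP P) 1) as [E|N]; [apply Tgt_single; auto|].
  destruct (Nat.eq_dec (kP P) 1) as [Ek|Nk].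
  - rewrite Tgt_asym by auto. apply succ_largest_eq. apply unique_max_largest; auto.
  - rewrite Tgt_sym by auto.
    destruct (nontrivial_symm P Hne N Nk) as [c [s [Hcs [Hcs1 [H1 H2]]]]].
    assert (Rq : rot_about (oP P) c s q = q).
    { destruct (pt_eq_dec (rot_about (oP P) c s q) q) as [|Nr]; auto. exfalso.
      specialize (H _ (H1 q Hq) Nr). rewrite H2 in H; auto. lia. }
    destruct (pt_eq_dec q (oP P)) as [|Nq]; auto. exfalso. apply Hcs1.
    destruct (rot_fix (oP P) c s q Rq Nq) as [-> ->]; auto.
Qed.

Lemma Tgt_max_mult P q : P <> [] -> In q P -> (mP P = 1 \/ kP P = 1)%nat ->
  (mult P q <= mult P (Tgt P))%nat.
Proof.
  intros Hne Hq [Hm|Hk]; [rewrite (Tgt_single P q Hm Hq); lia|].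
  destruct (Nat.eq_dec (mP P) 1) as [Hm|Hm]; [rewrite (Tgt_single P q Hm Hq); lia|].
  rewrite Tgt_asym by auto.
  apply (largest_max_mult P _ (succ_largest_spec P Hne Hm Hk) q Hq).
Qed.

Section Increase.
Variables P P' : list pt.
Hypothesis Hne : P <> [].
Hypothesis Hodd : Nat.Odd (length P).
Hypothesis Hstep : step_to (Tgt P) P P'.
Hypothesis Hchanged : P' <> P.

Lemma gain_at_target : (mult P (Tgt P) < mult P' (Tgt P))%nat.
Proof. apply step_mult_target_lt; auto. Qed.

Lemma target_in_next : In (Tgt P) P'.
Proof. apply mult_pos_In. pose proof gain_at_target. lia. Qed.

Lemma next_nonempty : P' <> [].
Proof. pose proof target_in_next. destruct P'; [destruct H | discriminate]. Qed.

Lemma not_gathered : mP P <> 1%nat.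
Proof.
  intros Hm. apply Hchanged. apply (step_gathered (Tgt P)); auto.
  intros x Hx. symmetry. apply Tgt_single; auto.
Qed.

(* Without symmetry the target was the largest point; it only gains robots
   while all others lose some, so it becomes the strict maximum. *)
Lemma increase_asym : kP P = 1%nat -> (mult P (Tgt P) < mult P' (Tgt P'))%nat.
Proof.
  intros Hk. pose proof gain_at_target.
  pose proof (largest_max_mult P _ (succ_largest_spec P Hne not_gathered Hk)) as Hmax.
  rewrite <- Tgt_asym in Hmax by (auto using not_gathered).
  rewrite (Tgt_strict_max P' (Tgt P) next_nonempty target_in_next); auto.
  intros x Hx Nx. destruct (step_In _ _ _ x Hstep Hx) as [HxP| ->]; [|congruence].
  pose proof (step_mult_le _ _ _ x Hstep Nx). pose proof (Hmax x HxP). lia.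
Qed.

(* With symmetry the target was o_P; if P' is symmetric too, Claim C says
   that its target o_{P'} is still o_P. *)
Lemma increase_sym : kP P <> 1%nat -> (mult P (Tgt P) < mult P' (Tgt P'))%nat.
Proof.
  intros Hk. pose proof gain_at_target.
  destruct (Nat.eq_dec (mP P') 1) as [Hm'|Hm'];
    [pose proof (Tgt_max_mult P' (Tgt P) next_nonempty target_in_next (or_introl Hm')); lia|].
  destruct (Nat.eq_dec (kP P') 1) as [Hk'|Hk'];
    [pose proof (Tgt_max_mult P' (Tgt P) next_nonempty target_in_next (or_intror Hk')); lia|].
  destruct (nontrivial_symm P Hne not_gathered Hk) as [c [s Hs]].
  destruct (nontrivial_symm P' next_nonempty Hm' Hk') as [c' [s' Hs']].
  pose proof Hstep as Hstep0. rewrite Tgt_sym in Hstep0 by (auto using not_gathered).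
  rewrite (Tgt_sym P') by auto.
  rewrite (same_centre P P' (oP P) (oP P') c s c' s' Hstep0 Hodd
             (mP_ge3 P Hne Hodd not_gathered Hk) Hs Hs').
  rewrite <- Tgt_sym by (auto using not_gathered). auto.
Qed.

Lemma target_mult_increases : (mult P (Tgt P) < mult P' (Tgt P'))%nat.
Proof.
  destruct (Nat.eq_dec (kP P) 1); [apply increase_asym | apply increase_sym]; auto.
Qed.

End Increase.

(** * Executions gather the non-faulty robots *)

Lemma config_nth n pos t i : (i < n)%nat -> nth i (config n pos t) origin = pos t i.
Proof.
  intros H. unfold config.
  rewrite nth_indep with (d' := pos t 0%nat) by (rewrite length_map, length_seq; auto).
  rewrite map_nth, seq_nth; auto.
Qed.

Lemma Forall2_map_seq (Rel : pt -> pt -> Prop) (f g : nat -> pt) l :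
  (forall i, In i l -> Rel (f i) (g i)) -> Forall2 Rel (map f l) (map g l).
Proof. induction l; simpl; intros H; constructor; auto. Qed.

Section Exec.
Variables (n : nat) (A : nat -> nat) (Fr : nat -> frame) (act : nat -> nat -> bool)
  (cr : crash_pattern) (pos : nat -> nat -> pt).
Hypothesis Hodd : Nat.Odd n.
Hypothesis HA : assignment n [twogat] A.
Hypothesis HFr : forall i, (i < n)%nat -> valid_frame (Fr i).
Hypothesis Hfair : fair n act.
Hypothesis Hex : execution n [twogat] A Fr act cr pos.

Let P_ (t : nat) : list pt := config n pos t.

Lemma move_to i t : (i < n)%nat -> act t i = true -> ~ crashed cr i t ->
  pos (S t) i = Tgt (P_ t).
Proof.
  intros Hi Ha Hc. destruct (Hex t i Hi) as [H1 _]. rewrite H1 by auto.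
  destruct HA as [HA1 _]. specialize (HA1 i Hi). simpl in HA1.
  replace (A i) with 0%nat by lia. simpl. apply robot_move; auto.
Qed.

Lemma round_step t : step_to (Tgt (P_ t)) (P_ t) (P_ (S t)).
Proof.
  unfold P_, config at 2 3. apply Forall2_map_seq. intros i Hi. apply in_seq in Hi.
  destruct (classic (act t i = true /\ ~ crashed cr i t)) as [[Ha Hc]|Hn].
  - right. apply move_to; auto; lia.
  - left. destruct (Hex t i ltac:(lia)) as [_ H2]. apply H2; auto.
Qed.

Definition gathered (t : nat) : Prop :=
  forall i j, (i < n)%nat -> (j < n)%nat -> nonfaulty cr i -> nonfaulty cr j ->
    pos t i = pos t j.

Lemma nonfaulty_not_crashed i t : nonfaulty cr i -> ~ crashed cr i t.
Proof. destruct cr as [[f tc]|]; simpl; tauto. Qed.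

Lemma config_nonempty t : P_ t <> [].
Proof.
  intros E. pose proof (config_length n pos t). unfold P_ in E. rewrite E in H.
  destruct Hodd. simpl in H. lia.
Qed.

Lemma change_before_activation t i : (i < n)%nat -> nonfaulty cr i -> pos t i <> Tgt (P_ t) ->
  forall d t0, (t <= t0)%nat -> P_ t0 = P_ t -> act (t0 + d) i = true ->
  exists t2, (t <= t2)%nat /\ P_ t2 = P_ t /\ P_ (S t2) <> P_ t2.
Proof.
  intros Hi Hnf Hpos d. induction d as [|d IH]; intros t0 Ht0 Ec Ha.
  - exists t0. split; auto. split; auto. rewrite Nat.add_0_r in Ha.
    assert (Ecur : pos t0 i = pos t i)
      by (rewrite <- (config_nth n pos t0 i), <- (config_nth n pos t i); auto;
          fold (P_ t0) (P_ t); rewrite Ec; auto).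
    intros E. assert (Epos : pos (S t0) i = pos t0 i).
    { rewrite <- (config_nth n pos (S t0) i), <- (config_nth n pos t0 i); auto.
      fold (P_ (S t0)) (P_ t0). rewrite E. auto. }
    rewrite (move_to i t0 Hi Ha (nonfaulty_not_crashed i t0 Hnf)), Ec in Epos. congruence.
  - destruct (list_eq_dec pt_eq_dec (P_ (S t0)) (P_ t0)) as [E|N].
    + apply (IH (S t0)); [lia | congruence |].
      replace (S t0 + d)%nat with (t0 + S d)%nat by lia. auto.
    + exists t0. split; auto.
Qed.

Lemma eventually_changes t i : (i < n)%nat -> nonfaulty cr i -> pos t i <> Tgt (P_ t) ->
  exists t2, (t <= t2)%nat /\ P_ t2 = P_ t /\ P_ (S t2) <> P_ t2.
Proof.
  intros Hi Hnf Hpos. destruct (Hfair i Hi t) as [t1 [Ht1 Ha1]].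
  apply (change_before_activation t i Hi Hnf Hpos (t1 - t) t); auto.
  replace (t + (t1 - t))%nat with t1 by lia. auto.
Qed.

Lemma eventually_gathered m t : (n - mult (P_ t) (Tgt (P_ t)) <= m)%nat -> exists t', gathered t'.
Proof.
  revert t. induction m as [m IH] using (well_founded_induction Wf_nat.lt_wf).
  intros t Hm. destruct (classic (gathered t)) as [G|NG]; [exists t; auto|].
  assert (Hfar : exists i, (i < n)%nat /\ nonfaulty cr i /\ pos t i <> Tgt (P_ t)).
  { apply NNPP. intros Hno. apply NG. intros i j Hi Hj Hni Hnj.
    assert (pos t i = Tgt (P_ t)) by (apply NNPP; intros C; apply Hno; exists i; auto).
    assert (pos t j = Tgt (P_ t)) by (apply NNPP; intros C; apply Hno; exists j; auto).
    congruence. }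
  destruct Hfar as [i [Hi [Hnf Hpos]]].
  destruct (eventually_changes t i Hi Hnf Hpos) as [t2 [Ht2 [Ec Nc]]].
  assert (Hodd2 : Nat.Odd (length (P_ t2))) by (unfold P_; rewrite config_length; auto).
  pose proof (target_mult_increases (P_ t2) (P_ (S t2)) (config_nonempty t2) Hodd2
                (round_step t2) Nc) as D.
  rewrite Ec in D.
  assert (Hbound : (mult (P_ (S t2)) (Tgt (P_ (S t2))) <= n)%nat)
    by (unfold mult; rewrite <- (config_length n pos (S t2)); apply count_occ_bound).
  apply (IH (n - mult (P_ (S t2)) (Tgt (P_ (S t2))))%nat ltac:(lia) (S t2)). lia.
Qed.

End Exec.

(** * 2gat is a function of multisets *)

Section Perm.
Variables (P Q : list pt).
Hypothesis Hp : Permutation P Q.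

Lemma In_perm x : In x P <-> In x Q.
Proof. split; apply Permutation_in; auto. apply Permutation_sym; auto. Qed.

Lemma mult_perm x : mult P x = mult Q x.
Proof. unfold mult. apply Permutation_count_occ; auto. Qed.

Lemma mP_perm : mP P = mP Q.
Proof.
  unfold mP. apply Permutation_length. apply NoDup_Permutation; try apply NoDup_nodup.
  intros x. rewrite !nodup_In. apply In_perm.
Qed.

Lemma SEC_perm : SEC P = SEC Q.
Proof.
  unfold SEC. f_equal. apply functional_extensionality. intros [o r]. apply propositional_extensionality.
  unfold is_SEC, encloses. cbn [fst snd]. split; intros [H1 H2]; split.
  - intros p Hpq. apply H1. apply In_perm; auto.
  - intros o' r' H. apply (H2 o' r'). intros p Hpp. apply H. apply In_perm; auto.
  - intros p Hpp. apply H1. apply In_perm; auto.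
  - intros o' r' H. apply (H2 o' r'). intros p Hpq. apply H. apply In_perm; auto.
Qed.

Lemma oP_perm : oP P = oP Q. Proof. unfold oP; rewrite SEC_perm; auto. Qed.

Lemma rhoP_perm : rhoP P = rhoP Q. Proof. unfold rhoP; rewrite SEC_perm; auto. Qed.

Lemma in_rot_group_perm cs : in_rot_group P cs <-> in_rot_group Q cs.
Proof.
  unfold in_rot_group, sym_rot. rewrite oP_perm. setoid_rewrite In_perm. setoid_rewrite mult_perm. tauto.
Qed.

Lemma kP_perm : kP P = kP Q.
Proof.
  unfold kP. rewrite mP_perm. destruct (Nat.eqb (mP Q) 1); auto.
  f_equal. apply functional_extensionality; intro k. apply propositional_extensionality.
  split; intros [L [H1 [H2 H3]]]; exists L; split; auto; split; auto; intros cs; rewrite H3;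
    rewrite in_rot_group_perm; tauto.
Qed.

Lemma xi_perm q : xi_coords P q = xi_coords Q q.
Proof. unfold xi_coords. rewrite oP_perm, rhoP_perm. auto. Qed.

Lemma view_perm q : Permutation (view P q) (view Q q).
Proof. unfold view. rewrite xi_perm. apply Permutation_map; auto. Qed.

Lemma ms_lt_perm A A' B B' : Permutation A A' -> Permutation B B' -> ms_lt A B -> ms_lt A' B'.
Proof.
  intros HA HB [s [t [H1 [H2 [H3 [H4 H5]]]]]]. exists s, t. repeat split; auto.
  - eapply perm_trans; eauto.
  - eapply perm_trans; eauto.
Qed.

Lemma succP_perm q q' : succP P q q' <-> succP Q q q'.
Proof.
  unfold succP. rewrite !mult_perm, oP_perm.
  split; intros [A|[A|[A [B C]]]]; auto; right; right; split; auto; split; auto.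
  - apply (ms_lt_perm _ _ _ _ (view_perm q') (view_perm q) C).
  - apply (ms_lt_perm _ _ _ _ (Permutation_sym (view_perm q')) (Permutation_sym (view_perm q)) C).
Qed.

Lemma succ_largest_perm : succ_largest P = succ_largest Q.
Proof.
  unfold succ_largest. f_equal. apply functional_extensionality; intro q. apply propositional_extensionality.
  rewrite In_perm. split; intros [H1 H2]; split; auto; intros q' Hq' N.
  - apply succP_perm. apply H2; auto. apply In_perm; auto.
  - apply succP_perm. apply H2; auto. apply In_perm; auto.
Qed.

Lemma twogat_perm : twogat P = twogat Q.
Proof. unfold twogat. rewrite mP_perm, kP_perm, succ_largest_perm, oP_perm. auto. Qed.

End Perm.

Lemma twogat_solves_FG n : Nat.Odd n -> solves_FG n [twogat].
Proof.
  intros Hodd A Fr act cr pos HA HFr Hfair Hcr Hex.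
  apply (eventually_gathered n A Fr act cr pos Hodd HA HFr Hfair Hex
           (n - mult (config n pos 0) (Tgt (config n pos 0)))%nat 0%nat).
  lia.
Qed.

Lemma twogat_algorithm n : (1 <= n)%nat -> algorithm n [twogat] 1.
Proof.
  intros Hn. split; [reflexivity|]. split; [lia|]. split.
  - intros phi [<-|[]] P Q Hpq. apply twogat_perm; auto.
  - intros i j Hi Hj Nij. lia.
Qed.

Theorem corollaryC4020 (n : nat) :
  Nat.Odd n ->
  solves_FG n [twogat] /\ MAS_is n (solves_FG n) 1.
Proof.
  intros Hodd. pose proof (twogat_solves_FG n Hodd) as Hsolve.
  split; [exact Hsolve | split].
  - exists [twogat]. split; [apply twogat_algorithm; destruct Hodd; lia | exact Hsolve].
  - intros m' Phi [_ [Hm _]] _. lia.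
Qed.
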